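(* If a quasi-equation with countably many premises in the language of $\mathcal{V}_{\sigma\ell\mathbb{G}}$ (respectively $\mathcal{V}_{\sigma\ell\mathbb{G}_u}$, $\mathcal{V}_{\sigma\mathbb{RS}}$, $\mathcal{V}_{\sigma\mathbb{RS}_u}$) holds in $\mathbb{R}$ (with its standard operations, $\bigvee^-(g,f_1,f_2,\dots)=\sup_{n\ge1}\{f_n\wedge g\}$, and $1$ the real number $1$), then it holds in every object of $\mathcal{V}_{\sigma\ell\mathbb{G}}$ (respectively $\mathcal{V}_{\sigma\ell\mathbb{G}_u}$, $\mathcal{V}_{\sigma\mathbb{RS}}$, $\mathcal{V}_{\sigma\mathbb{RS}_u}$). In particular each of these is generated by $\mathbb{R}$ as a quasi-variety.
   Context: A quasi-equation with countably many premises is an expression $[\tau_1=\rho_1,\tau_2=\rho_2,\dots]\Rightarrow\tau=\rho$ with terms $\tau,\rho,\tau_n,\rho_n$; it holds in $A$ if under every assignment, all premises holding implies the conclusion holds. Axioms (A1)–(A3): (A1) $\bigvee_{n\ge1}^g f_n=\bigvee_{n\ge1}^g(f_n\wedge g)$; (A2) $\bigvee_{n\ge1}^g f_n=(f_1\wedge g)\vee\bigvee^-(g,f_2,f_3,\dots)$; (A3) $\bigvee_{n\ge1}^g(f_n\wedge h)\le h$, where $\bigvee_{n\ge1}^g f_n:=\bigvee^-(g,f_1,f_2,\dots)$, $\bigvee^-$ of countably infinite arity, and $a\le b$ means $a\wedge b=a$. $\mathcal{V}_{\sigma\ell\mathbb{G}}$: $\ell$-group axioms plus (A1)–(A3) in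 the language $0,+,-,\vee,\wedge,\bigvee^-$. $\mathcal{V}_{\sigma\mathbb{RS}}$: Riesz space axioms plus (A1)–(A3) in the Riesz space language (including scalar multiplications $\lambda\cdot-$, $\lambda\in\mathbb{R}$) plus $\bigvee^-$. $\mathcal{V}_{\sigma\ell\mathbb{G}_u}$ and $\mathcal{V}_{\sigma\mathbb{RS}_u}$: the same with an additional constant $1$ and the additional axiom $\bigvee_{n\ge1}^{|f|}(|f|\wedge n1)=|f|$. *)

From Stdlib Require Import Reals Lra.
Open Scope R_scope.

Inductive lang : Type := L_lG | L_lGu | L_RS | L_RSu.

Definition has_one (L : lang) : bool :=
  match L with L_lGu | L_RSu => true | _ => false end.
Definition has_scal (L : lang) : bool :=
  match L with L_RS | L_RSu => true | _ => false end.

(** Terms over the countable set of variables [nat].  [TSupm s] is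
    [\/^-(s 0, s 1, s 2, ...)], i.e. [\/^-(g, f_1, f_2, ...)] with
    [g = s 0] and [f_n = s n]. *)
Inductive term : Type :=
| TVar  : nat -> term
| TZero : term
| TOne  : term
| TAdd  : term -> term -> term
| TOpp  : term -> term
| TJoin : term -> term -> term
| TMeet : term -> term -> term
| TScal : R -> term -> term
| TSupm : (nat -> term) -> term.

Fixpoint in_lang (L : lang) (t : term) : Prop :=
  match t with
  | TVar _ => True
  | TZero => True
  | TOne => has_one L = true
  | TAdd a b => in_lang L a /\ in_lang L b
  | TOpp a => in_lang L a
  | TJoin a b => in_lang L a /\ in_lang L b
  | TMeet a b => in_lang L a /\ in_lang L b
  | TScal _ a => has_scal L = true /\ in_lang L a
  | TSupm s => forall n, in_lang L (s n)
  end.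

(** * Structures (with all symbols of the largest language; symbols not in
    the language under consideration are simply unconstrained/unused). *)
Record structure : Type := Struct {
  car  :> Type;
  zero : car;
  one  : car;
  add  : car -> car -> car;
  opp  : car -> car;
  join : car -> car -> car;
  meet : car -> car -> car;
  scal : R -> car -> car;
  supm : (nat -> car) -> car
}.

Fixpoint eval (A : structure) (v : nat -> A) (t : term) : A :=
  match t with
  | TVar i => v i
  | TZero => zero A
  | TOne => one A
  | TAdd a b => add A (eval A v a) (eval A v b)
  | TOpp a => opp A (eval A v a)
  | TJoin a b => join A (eval A v a) (eval A v b)
  | TMeet a b => meet A (eval A v a) (eval A v b)
  | TScal r a => scal A r (eval A v a)
  | TSupm s => supm A (fun n => eval A v (s n))
  end.

Definition qe_holds (A : structure) (prem : nat -> term * term) (t1 t2 : term)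
  : Prop :=
  forall v : nat -> A,
    (forall n, eval A v (fst (prem n)) = eval A v (snd (prem n))) ->
    eval A v t1 = eval A v t2.

Definition le (A : structure) (a b : A) : Prop := meet A a b = a.

(** [scons g f] is the sequence [g, f 0, f 1, ...]; thus
    [supm A (scons g f)] is [\/^g_{n>=1} f_n] with [f_n = f (n-1)]. *)
Definition scons {T : Type} (g : T) (f : nat -> T) (n : nat) : T :=
  match n with O => g | S k => f k end.

Definition lgroup_axioms (A : structure) : Prop :=
  (forall x y z, add A x (add A y z) = add A (add A x y) z) /\
  (forall x y, add A x y = add A y x) /\
  (forall x, add A x (zero A) = x) /\
  (forall x, add A x (opp A x) = zero A) /\
  (forall x y z, join A x (join A y z) = join A (join A x y) z) /\
  (forall x y, join A x y = join A y x) /\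
  (forall x y z, meet A x (meet A y z) = meet A (meet A x y) z) /\
  (forall x y, meet A x y = meet A y x) /\
  (forall x y, join A x (meet A x y) = x) /\
  (forall x y, meet A x (join A x y) = x) /\
  (forall x y z, add A x (join A y z) = join A (add A x y) (add A x z)).

Definition riesz_axioms (A : structure) : Prop :=
  (forall (a : R) x y, scal A a (add A x y) = add A (scal A a x) (scal A a y)) /\
  (forall (a b : R) x, scal A (a + b) x = add A (scal A a x) (scal A b x)) /\
  (forall (a b : R) x, scal A (a * b) x = scal A a (scal A b x)) /\
  (forall x, scal A 1 x = x) /\
  (forall (a : R) x y, 0 <= a -> le A x y -> le A (scal A a x) (scal A a y)).

Definition sigma_axioms (A : structure) : Prop :=
  (forall (g : A) (f : nat -> A),
      supm A (scons g f) = supm A (scons g (fun n => meet A (f n) g))) /\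
  (forall (g : A) (f : nat -> A),
      supm A (scons g f) =
      join A (meet A (f 0%nat) g) (supm A (scons g (fun n => f (S n))))) /\
  (forall (g h : A) (f : nat -> A),
      le A (supm A (scons g (fun n => meet A (f n) h))) h).

Definition absv (A : structure) (x : A) : A := join A x (opp A x).

Fixpoint nmul (A : structure) (n : nat) (x : A) : A :=
  match n with O => zero A | S k => add A (nmul A k x) x end.

Definition unit_axiom (A : structure) : Prop :=
  forall f : A,
    supm A (scons (absv A f) (fun k => meet A (absv A f) (nmul A (S k) (one A))))
    = absv A f.

Definition in_variety (L : lang) (A : structure) : Prop :=
  lgroup_axioms A /\ sigma_axioms A /\
  (has_scal L = true -> riesz_axioms A) /\
  (has_one L = true -> unit_axiom A).

Definition Rsupm_set (s : nat -> R) (x : R) : Prop :=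
  exists n : nat, x = Rmin (s (S n)) (s O).

Lemma Rsupm_bound (s : nat -> R) : bound (Rsupm_set s).
Proof.
  exists (s O); intros x [n ->]; apply Rmin_r.
Qed.

Lemma Rsupm_nonempty (s : nat -> R) : exists x, Rsupm_set s x.
Proof. exists (Rmin (s 1%nat) (s O)); exists O; reflexivity. Qed.

Definition Rsupm (s : nat -> R) : R :=
  proj1_sig (completeness (Rsupm_set s) (Rsupm_bound s) (Rsupm_nonempty s)).

Definition Rstruct : structure :=
  {| car := R; zero := 0; one := 1; add := Rplus; opp := Ropp;
     join := Rmax; meet := Rmin; scal := Rmult; supm := Rsupm |}.

From Stdlib Require Import Reals Lra Lia ZArith FunctionalExtensionality ClassicalEpsilon
  Classical Cantor.

(** Suppose the premises hold in [A] under [v] while [t1 <> t2] there, and let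
    [c = |t1 - t2| > 0].  Fix a positive [e] that sees [c]: [e = 1] in the unital
    case (the unit axiom makes the component of [1] in the band of [c] nonzero)
    and [e = c] otherwise.  By sigma-completeness every [x] and rational [q]
    determine the component of [e] in the band of [(x - q e)^+], which plays the
    role of the set "[x > q]".  Only countably many elements of [A] are involved
    (the values of the subterms), so a Rasiowa-Sikorski argument yields a filter of
    such components meeting countably many coverings of [e]; reading off each [x]
    as the supremum of the [q] whose component lies in the filter then gives a map
    to [R] that commutes with all operations, countable suprema included, on these
    elements.  The premises therefore hold in [R], hence so does the conclusion,
    yet [c] is sent to a positive number. *)

Definition immediate_subterm (c t : term) : Prop :=
  match t with
  | TAdd a b | TJoin a b | TMeet a b => c = a \/ c = b
  | TOpp a | TScal _ a => c = a
  | TSupm s => exists i, c = s i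
  | _ => False
  end.

(** [subterm t] enumerates the subterms of [t]: [subterm t (S n)], with [n]
    coding the pair [(i, j)], is the [j]-th subterm of the [i]-th child. *)
Fixpoint subterm (t : term) (n : nat) : term :=
  match n with
  | O => t
  | S n' =>
    let (i, j) := Cantor.of_nat n' in
    match t with
    | TAdd a b | TJoin a b | TMeet a b => if Nat.eqb i 0 then subterm a j else subterm b j
    | TOpp a | TScal _ a => subterm a j
    | TSupm s => subterm (s i) j
    | _ => t
    end
  end.

Lemma subterm_0 t : subterm t 0 = t.
Proof. destruct t; reflexivity. Qed.

Lemma subterm_S t i j : subterm t (S (Cantor.to_nat (i, j))) =
  match t with
  | TAdd a b | TJoin a b | TMeet a b => if Nat.eqb i 0 then subterm a j else subterm b j
  | TOpp a | TScal _ a => subterm a j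
  | TSupm s => subterm (s i) j
  | _ => t
  end.
Proof. destruct t; cbn -[Cantor.of_nat Cantor.to_nat]; rewrite Cantor.cancel_of_to; reflexivity. Qed.

Lemma subterm_of_immediate c t : immediate_subterm c t ->
  exists i, forall j, subterm t (S (Cantor.to_nat (i, j))) = subterm c j.
Proof.
  intro H; destruct t; simpl in H; try contradiction;
    repeat match goal with
           | H : _ \/ _ |- _ => destruct H as [H | H]
           | H : exists _, _ |- _ => destruct H
           end; subst;
    first [ exists 0%nat; intro j; rewrite subterm_S; reflexivity
          | exists 1%nat; intro j; rewrite subterm_S; reflexivity
          | eexists; intro j; rewrite subterm_S; reflexivity ].
Qed.

Lemma subterm_closed t n c : immediate_subterm c (subterm t n) -> exists n', subterm t n' = c.
Proof.
  revert n c.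
  induction t as [| | |a IHa b IHb|a IHa|a IHa b IHb|a IHa b IHb|r a IHa|s IHs];
    (intros [|p] c Hc;
     [ cbn [subterm] in Hc; try (simpl in Hc; contradiction);
       destruct (subterm_of_immediate c _ Hc) as [i Hi];
       exists (S (Cantor.to_nat (i, 0%nat))); rewrite Hi; apply subterm_0 | simpl in Hc ]);
    destruct (Cantor.of_nat p) as [i j]; simpl in Hc; try contradiction;
    try match type of Hc with context [Nat.eqb i 0] => destruct (Nat.eqb i 0) eqn:Ei end;
    first [ destruct (IHa j c Hc) as [n' Hn'] | destruct (IHb j c Hc) as [n' Hn']
          | destruct (IHs i j c Hc) as [n' Hn'] ];
    exists (S (Cantor.to_nat (i, n'))); rewrite subterm_S; try rewrite Ei; exact Hn'.
Qed.

Open Scope R_scope.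

Definition frac (m : Z) (k : nat) : R := IZR m / INR (S k).

Lemma INR_S_gt0 k : 0 < INR (S k).
Proof. apply lt_0_INR; lia. Qed.

Lemma div_le_div_iff a b c d : 0 < b -> 0 < d -> a / b <= c / d <-> a * d <= c * b.
Proof.
  intros Hb Hd; split; intro H.
  - apply (Rmult_le_compat_r (b * d)) in H; [|nra].
    replace (a / b * (b * d)) with (a * d) in H by (field; lra).
    replace (c / d * (b * d)) with (c * b) in H by (field; lra). exact H.
  - apply (Rmult_le_reg_r (b * d)); [nra|].
    replace (a / b * (b * d)) with (a * d) by (field; lra).
    replace (c / d * (b * d)) with (c * b) by (field; lra). exact H.
Qed.

Lemma frac_le m k m' k' :
  frac m k <= frac m' k' <-> (m * Z.of_nat (S k') <= m' * Z.of_nat (S k))%Z.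
Proof.
  unfold frac. rewrite div_le_div_iff by apply INR_S_gt0. rewrite !INR_IZR_INZ, <- !mult_IZR.
  split; [apply le_IZR | apply IZR_le].
Qed.

Lemma frac_lt m k m' k' :
  frac m k < frac m' k' <-> (m * Z.of_nat (S k') < m' * Z.of_nat (S k))%Z.
Proof.
  destruct (Rlt_le_dec (frac m k) (frac m' k')) as [H | H];
    [| pose proof (proj1 (frac_le _ _ _ _) H)]; split; intro; try lra; try lia.
  destruct (Z_lt_le_dec (m * Z.of_nat (S k')) (m' * Z.of_nat (S k))) as [|Hz]; auto.
  apply frac_le in Hz. lra.
Qed.

Lemma frac_add m1 k1 m2 k2 :
  frac m1 k1 + frac m2 k2 =
  frac (m1 * Z.of_nat (S k2) + m2 * Z.of_nat (S k1)) (Nat.pred (S k1 * S k2)).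
Proof.
  unfold frac. replace (S (Nat.pred (S k1 * S k2))) with (S k1 * S k2)%nat by lia.
  pose proof (INR_S_gt0 k1); pose proof (INR_S_gt0 k2).
  rewrite mult_INR, plus_IZR, !mult_IZR, <- !INR_IZR_INZ. field; lra.
Qed.

Lemma frac_add_le m1 k1 m2 k2 m3 k3 :
  frac m1 k1 + frac m2 k2 <= frac m3 k3 <->
  ((m1 * Z.of_nat (S k2) + m2 * Z.of_nat (S k1)) * Z.of_nat (S k3)
   <= m3 * (Z.of_nat (S k1) * Z.of_nat (S k2)))%Z.
Proof.
  rewrite frac_add, frac_le. rewrite <- Nat2Z.inj_mul.
  replace (S (Nat.pred (S k1 * S k2))) with (S k1 * S k2)%nat by lia. reflexivity.
Qed.

Lemma frac_le_add m1 k1 m2 k2 m3 k3 :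
  frac m3 k3 <= frac m1 k1 + frac m2 k2 <->
  (m3 * (Z.of_nat (S k1) * Z.of_nat (S k2))
   <= (m1 * Z.of_nat (S k2) + m2 * Z.of_nat (S k1)) * Z.of_nat (S k3))%Z.
Proof.
  rewrite frac_add, frac_le. rewrite <- Nat2Z.inj_mul.
  replace (S (Nat.pred (S k1 * S k2))) with (S k1 * S k2)%nat by lia. reflexivity.
Qed.

Lemma frac_dense a b : a < b -> exists m k, a < frac m k < b.
Proof.
  intro H.
  destruct (archimed (/ (b - a))) as [H1 _].
  set (n := up (/ (b - a))) in *.
  assert (Hn : (0 < n)%Z).
  { apply lt_IZR. assert (0 < / (b - a)) by (apply Rinv_0_lt_compat; lra). lra. }
  assert (Hp : 0 < IZR n) by (apply IZR_lt; lia).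
  assert (Hgap : 1 < (b - a) * IZR n).
  { apply (Rmult_lt_reg_r (/ (b - a))); [apply Rinv_0_lt_compat; lra|].
    replace ((b - a) * IZR n * / (b - a)) with (IZR n) by (field; lra). lra. }
  exists (up (a * IZR n)), (Z.to_nat n - 1)%nat.
  unfold frac. replace (INR (S (Z.to_nat n - 1))) with (IZR n)
    by (rewrite INR_IZR_INZ; f_equal; lia).
  destruct (archimed (a * IZR n)) as [H2 H3].
  split; apply (Rmult_lt_reg_r (IZR n)); auto;
    replace (IZR (up (a * IZR n)) / IZR n * IZR n) with (IZR (up (a * IZR n))) by (field; lra);
    nra.
Qed.

Lemma nat_above r : exists N, r <= INR N.
Proof.
  destruct (archimed r) as [H _]. exists (Z.to_nat (up r)).
  rewrite INR_IZR_INZ. destruct (Z_le_gt_dec (up r) 0).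
  - assert (IZR (up r) <= 0) by (apply IZR_le; auto).
    assert (0 <= IZR (Z.of_nat (Z.to_nat (up r)))) by (apply IZR_le; lia). lra.
  - rewrite Z2Nat.id by lia. lra.
Qed.

Section LatticeGroup.
Variable A : structure.
Hypothesis HA : lgroup_axioms A.

Local Notation "x ⊕ y" := (add A x y) (at level 50, left associativity).
Local Notation "⊖ x" := (opp A x) (at level 35, right associativity).
Local Notation "x ⊔ y" := (join A x y) (at level 40, left associativity).
Local Notation "x ⊓ y" := (meet A x y) (at level 40, left associativity).
Local Notation "x ≤ y" := (le A x y) (at level 70).
Local Notation "𝟎" := (zero A).
Local Notation nm := (nmul A).

Lemma addA x y w : x ⊕ (y ⊕ w) = x ⊕ y ⊕ w. Proof. apply HA. Qed.
Lemma addC x y : x ⊕ y = y ⊕ x. Proof. apply HA. Qed.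
Lemma addr0 x : x ⊕ 𝟎 = x. Proof. apply HA. Qed.
Lemma addrN x : x ⊕ ⊖ x = 𝟎. Proof. apply HA. Qed.
Lemma joinA x y w : x ⊔ (y ⊔ w) = x ⊔ y ⊔ w. Proof. apply HA. Qed.
Lemma joinC x y : x ⊔ y = y ⊔ x. Proof. apply HA. Qed.
Lemma meetA x y w : x ⊓ (y ⊓ w) = x ⊓ y ⊓ w. Proof. apply HA. Qed.
Lemma meetC x y : x ⊓ y = y ⊓ x. Proof. apply HA. Qed.
Lemma joinKI x y : x ⊔ (x ⊓ y) = x. Proof. apply HA. Qed.
Lemma meetKU x y : x ⊓ (x ⊔ y) = x. Proof. apply HA. Qed.
Lemma addJ x y w : x ⊕ (y ⊔ w) = (x ⊕ y) ⊔ (x ⊕ w). Proof. apply HA. Qed.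

Lemma add0r x : 𝟎 ⊕ x = x. Proof. rewrite addC; apply addr0. Qed.
Lemma addNr x : ⊖ x ⊕ x = 𝟎. Proof. rewrite addC; apply addrN. Qed.
Lemma addKr x y : ⊖ x ⊕ (x ⊕ y) = y. Proof. rewrite addA, addNr, add0r; reflexivity. Qed.
Lemma addrK x y : x ⊕ y ⊕ ⊖ y = x. Proof. rewrite <- addA, addrN, addr0; reflexivity. Qed.
Lemma addrNK x y : x ⊕ ⊖ y ⊕ y = x. Proof. rewrite <- addA, addNr, addr0; reflexivity. Qed.
Lemma addIr w x y : x ⊕ w = y ⊕ w -> x = y.
Proof. intro H. rewrite <- (addrK x w), <- (addrK y w), H; reflexivity. Qed.
Lemma addrI w x y : w ⊕ x = w ⊕ y -> x = y.
Proof. rewrite (addC w x), (addC w y). apply addIr. Qed.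
Lemma opp_unique x y : x ⊕ y = 𝟎 -> y = ⊖ x.
Proof. intro H. apply (addrI x). rewrite H, addrN; reflexivity. Qed.
Lemma oppK x : ⊖ ⊖ x = x. Proof. symmetry. apply opp_unique, addNr. Qed.
Lemma oppD x y : ⊖ (x ⊕ y) = ⊖ x ⊕ ⊖ y.
Proof.
  symmetry; apply opp_unique.
  rewrite (addC (⊖ x) (⊖ y)), addA, <- (addA x y), addrN, addr0, addrN. reflexivity.
Qed.
Lemma opp0 : ⊖ 𝟎 = 𝟎. Proof. symmetry; apply opp_unique, addr0. Qed.
Lemma opp_sub x y : ⊖ (x ⊕ ⊖ y) = y ⊕ ⊖ x. Proof. rewrite oppD, oppK, addC. reflexivity. Qed.
Lemma addCA x y w : x ⊕ (y ⊕ w) = y ⊕ (x ⊕ w). Proof. rewrite !addA, (addC x y); reflexivity. Qed.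
Lemma addAC x y w : x ⊕ y ⊕ w = x ⊕ w ⊕ y. Proof. rewrite <- !addA, (addC y w); reflexivity. Qed.
Lemma addACA x y u w : x ⊕ y ⊕ (u ⊕ w) = x ⊕ u ⊕ (y ⊕ w).
Proof. rewrite !addA, (addAC x y u). reflexivity. Qed.
Lemma sub_add_sub a b c d : (a ⊕ ⊖ b) ⊕ (c ⊕ ⊖ d) = (a ⊕ c) ⊕ ⊖ (b ⊕ d).
Proof. rewrite oppD, addACA. reflexivity. Qed.
Lemma sub_eq a b c d : a ⊕ d = c ⊕ b -> a ⊕ ⊖ b = c ⊕ ⊖ d.
Proof. intro H. rewrite <- (addrK a d), H, addAC, addrK. reflexivity. Qed.
Lemma idem_eq0 w : w ⊕ w = w -> w = 𝟎.
Proof. intro H. apply (addrI w). rewrite H, addr0. reflexivity. Qed.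

Lemma joinxx x : x ⊔ x = x. Proof. rewrite <- (meetKU x x) at 2. apply joinKI. Qed.
Lemma meetxx x : x ⊓ x = x. Proof. rewrite <- (joinKI x x) at 2. apply meetKU. Qed.
Lemma le_join_iff x y : x ≤ y <-> x ⊔ y = y.
Proof.
  unfold le; split; intro H.
  - rewrite <- H, meetC, joinC, joinKI. reflexivity.
  - rewrite <- H. apply meetKU.
Qed.
Lemma le_refl x : x ≤ x. Proof. apply meetxx. Qed.
Lemma le_antisym x y : x ≤ y -> y ≤ x -> x = y.
Proof. unfold le; intros H1 H2. rewrite <- H1, meetC. exact H2. Qed.
Lemma le_trans x y w : x ≤ y -> y ≤ w -> x ≤ w.
Proof. unfold le; intros H1 H2. rewrite <- H1, <- meetA, H2. reflexivity. Qed.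
Lemma meet_le_l x y : x ⊓ y ≤ x.
Proof. unfold le. rewrite (meetC x y), <- meetA, meetxx. reflexivity. Qed.
Lemma meet_le_r x y : x ⊓ y ≤ y. Proof. rewrite meetC; apply meet_le_l. Qed.
Lemma le_meet x y w : w ≤ x -> w ≤ y -> w ≤ x ⊓ y.
Proof. unfold le; intros H1 H2. rewrite meetA, H1, H2. reflexivity. Qed.
Lemma join_ge_l x y : x ≤ x ⊔ y. Proof. apply meetKU. Qed.
Lemma join_ge_r x y : y ≤ x ⊔ y. Proof. rewrite joinC; apply join_ge_l. Qed.
Lemma join_le x y w : x ≤ w -> y ≤ w -> x ⊔ y ≤ w.
Proof. rewrite !le_join_iff; intros H1 H2. rewrite <- joinA, H2, H1. reflexivity. Qed.
Lemma meet_mono x y u w : x ≤ u -> y ≤ w -> x ⊓ y ≤ u ⊓ w.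
Proof.
  intros; apply le_meet;
    [eapply le_trans; [apply meet_le_l | eauto] | eapply le_trans; [apply meet_le_r | eauto]].
Qed.
Lemma join_mono x y u w : x ≤ u -> y ≤ w -> x ⊔ y ≤ u ⊔ w.
Proof.
  intros; apply join_le;
    [eapply le_trans; [eauto | apply join_ge_l] | eapply le_trans; [eauto | apply join_ge_r]].
Qed.
Lemma meet_le_trans_l a b c : a ≤ c -> a ⊓ b ≤ c.
Proof. intro; eapply le_trans; [apply meet_le_l | auto]. Qed.

Lemma lerD2l w x y : x ≤ y -> w ⊕ x ≤ w ⊕ y.
Proof. rewrite !le_join_iff; intro H. rewrite <- addJ, H. reflexivity. Qed.
Lemma lerD2r w x y : x ≤ y -> x ⊕ w ≤ y ⊕ w.
Proof. rewrite (addC x w), (addC y w). apply lerD2l. Qed.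
Lemma lerD x y u w : x ≤ u -> y ≤ w -> x ⊕ y ≤ u ⊕ w.
Proof. intros; eapply le_trans; [apply lerD2r; eauto | apply lerD2l; eauto]. Qed.
Lemma lerD2l_inv w x y : w ⊕ x ≤ w ⊕ y -> x ≤ y.
Proof. intro H. apply (lerD2l (⊖ w)) in H. rewrite !addKr in H. exact H. Qed.
Lemma lerN2 x y : x ≤ y -> ⊖ y ≤ ⊖ x.
Proof.
  intro H. apply (lerD2l (⊖ x ⊕ ⊖ y)) in H.
  replace (⊖ x ⊕ ⊖ y ⊕ x) with (⊖ y) in H by (rewrite addAC, addNr, add0r; reflexivity).
  rewrite addrNK in H. exact H.
Qed.
Lemma lerN2_iff x y : ⊖ y ≤ ⊖ x <-> x ≤ y.
Proof. split; [intro H; apply lerN2 in H; rewrite !oppK in H; exact H | apply lerN2]. Qed.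
Lemma le_subr_iff x y w : x ⊕ y ≤ w <-> x ≤ w ⊕ ⊖ y.
Proof.
  split; intro H.
  - apply (lerD2r (⊖ y)) in H. rewrite addrK in H; exact H.
  - apply (lerD2r y) in H. rewrite addrNK in H; exact H.
Qed.
Lemma le_addr_iff x y w : x ⊕ ⊖ y ≤ w <-> x ≤ w ⊕ y.
Proof. rewrite le_subr_iff, oppK. reflexivity. Qed.
Lemma le_sub_iff x y : x ≤ y <-> x ⊕ ⊖ y ≤ 𝟎.
Proof.
  split; intro H; [apply (lerD2r (⊖ y)) in H; rewrite addrN in H
                  | apply (lerD2r y) in H; rewrite addrNK, add0r in H]; exact H.
Qed.
Lemma subr_ge0_iff x y : x ≤ y <-> 𝟎 ≤ y ⊕ ⊖ x.
Proof.
  split; intro H; [apply (lerD2r (⊖ x)) in H; rewrite addrN in H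
                  | apply (lerD2r x) in H; rewrite addrNK, add0r in H]; exact H.
Qed.
Lemma addM x y w : x ⊕ (y ⊓ w) = (x ⊕ y) ⊓ (x ⊕ w).
Proof.
  apply le_antisym.
  - apply le_meet; apply lerD2l; [apply meet_le_l | apply meet_le_r].
  - apply (lerD2l_inv (⊖ x)). rewrite addKr. apply le_meet.
    + rewrite <- (addKr x y) at 2. apply lerD2l, meet_le_l.
    + rewrite <- (addKr x w) at 2. apply lerD2l, meet_le_r.
Qed.
Lemma addJr x y w : (y ⊔ w) ⊕ x = (y ⊕ x) ⊔ (w ⊕ x). Proof. rewrite !(addC _ x). apply addJ. Qed.
Lemma addMr x y w : (y ⊓ w) ⊕ x = (y ⊕ x) ⊓ (w ⊕ x). Proof. rewrite !(addC _ x). apply addM. Qed.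
Lemma oppJ x y : ⊖ (x ⊔ y) = ⊖ x ⊓ ⊖ y.
Proof.
  apply le_antisym.
  - apply le_meet; apply lerN2; [apply join_ge_l | apply join_ge_r].
  - rewrite <- lerN2_iff, oppK.
    apply join_le; rewrite <- lerN2_iff, oppK; [apply meet_le_l | apply meet_le_r].
Qed.
Lemma oppM x y : ⊖ (x ⊓ y) = ⊖ x ⊔ ⊖ y.
Proof. rewrite <- (oppK x), <- (oppK y) at 1. rewrite <- oppJ, oppK. reflexivity. Qed.
Lemma add_join_meet x y : x ⊕ y = (x ⊔ y) ⊕ (x ⊓ y).
Proof.
  apply (addIr (⊖ (x ⊔ y))). rewrite (addC (x ⊔ y)), addrK.
  rewrite oppJ, addM, (addC x y) at 1. rewrite addrK, <- addA, addrN, addr0, meetC. reflexivity.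
Qed.

Lemma decomp_meet_join a y : y = (a ⊓ y) ⊕ (a ⊔ y) ⊕ ⊖ a.
Proof. rewrite (addC (a ⊓ y)), <- add_join_meet, (addC a y), addrK. reflexivity. Qed.

Lemma meetJ a y w : a ⊓ (y ⊔ w) = (a ⊓ y) ⊔ (a ⊓ w).
Proof.
  apply le_antisym.
  2:{ apply join_le; apply meet_mono; auto using le_refl, join_ge_l, join_ge_r. }
  set (u := (a ⊓ y) ⊔ (a ⊓ w)).
  assert (H : y ⊔ w ≤ u ⊕ (a ⊔ (y ⊔ w)) ⊕ ⊖ a).
  { apply join_le; [rewrite (decomp_meet_join a y) at 1 | rewrite (decomp_meet_join a w) at 1];
      apply lerD2r, lerD; unfold u; auto using join_ge_l, join_ge_r.
    - apply join_mono; auto using le_refl, join_ge_l.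
    - apply join_mono; auto using le_refl, join_ge_r. }
  rewrite (decomp_meet_join a (y ⊔ w)) in H at 1.
  apply (lerD2r a), (lerD2r (⊖ (a ⊔ (y ⊔ w)))) in H. rewrite !addrNK, !addrK in H. exact H.
Qed.
Lemma joinM a y w : a ⊔ (y ⊓ w) = (a ⊔ y) ⊓ (a ⊔ w).
Proof.
  rewrite <- (oppK (a ⊔ (y ⊓ w))), <- (oppK ((a ⊔ y) ⊓ (a ⊔ w))). f_equal.
  rewrite oppJ, oppM, meetJ, oppM, !oppJ. reflexivity.
Qed.

Definition pos_part x := x ⊔ 𝟎.
Definition neg_part x := ⊖ x ⊔ 𝟎.

Lemma pos_ge0 x : 𝟎 ≤ pos_part x. Proof. apply join_ge_r. Qed.
Lemma neg_ge0 x : 𝟎 ≤ neg_part x. Proof. apply join_ge_r. Qed.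
Lemma le_pos x : x ≤ pos_part x. Proof. apply join_ge_l. Qed.
Lemma pos_mono x y : x ≤ y -> pos_part x ≤ pos_part y.
Proof. intro; apply join_mono; auto using le_refl. Qed.
Lemma pos_id x : 𝟎 ≤ x -> pos_part x = x.
Proof. intro H. unfold pos_part. rewrite joinC. apply le_join_iff, H. Qed.
Lemma pos_eq0 x : x ≤ 𝟎 -> pos_part x = 𝟎.
Proof. apply le_join_iff. Qed.
Lemma neg_eq0 x : 𝟎 ≤ x -> neg_part x = 𝟎.
Proof. intro H. apply pos_eq0. rewrite <- opp0. apply lerN2, H. Qed.
Lemma pos_sub_neg x : x = pos_part x ⊕ ⊖ neg_part x.
Proof.
  unfold pos_part, neg_part. rewrite oppJ, oppK, opp0, <- add_join_meet, addr0. reflexivity.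
Qed.
Lemma neg_sub x y : neg_part (x ⊕ ⊖ y) = pos_part (y ⊕ ⊖ x).
Proof. unfold neg_part, pos_part. rewrite opp_sub. reflexivity. Qed.
Lemma pos_sub_meet x e : pos_part (x ⊕ ⊖ e) = x ⊕ ⊖ (x ⊓ e).
Proof. unfold pos_part. rewrite oppM, addJ, addrN, joinC. reflexivity. Qed.
Lemma join_pos a b : a ⊔ b = b ⊕ pos_part (a ⊕ ⊖ b).
Proof. unfold pos_part. rewrite addJ, addCA, addrN, !addr0. reflexivity. Qed.
Lemma pos_meet x y : pos_part (x ⊓ y) = pos_part x ⊓ pos_part y.
Proof. unfold pos_part. rewrite !(joinC _ 𝟎). apply joinM. Qed.
Lemma pos_join x y : pos_part (x ⊔ y) = pos_part x ⊔ pos_part y.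
Proof.
  unfold pos_part. rewrite <- joinA, (joinC y), <- (joinxx 𝟎) at 1.
  rewrite <- joinA, joinA, (joinC 𝟎 y). reflexivity.
Qed.

Lemma addr_ge0 x y : 𝟎 ≤ x -> 𝟎 ≤ y -> 𝟎 ≤ x ⊕ y.
Proof. intros; rewrite <- (addr0 𝟎). apply lerD; auto. Qed.
Lemma ler_addr x y : 𝟎 ≤ y -> x ≤ x ⊕ y.
Proof. intro H. rewrite <- (addr0 x) at 1. apply lerD2l, H. Qed.
Lemma ler_subl x y : 𝟎 ≤ y -> x ⊕ ⊖ y ≤ x.
Proof. intro H. apply le_subr_iff. rewrite oppK. apply ler_addr, H. Qed.
Lemma pos_add_le x y : pos_part (x ⊕ y) ≤ pos_part x ⊕ pos_part y.
Proof. apply join_le. apply lerD; apply le_pos. apply addr_ge0; apply pos_ge0. Qed.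
Lemma join_le_add p q : 𝟎 ≤ p -> 𝟎 ≤ q -> p ⊔ q ≤ p ⊕ q.
Proof. intros; apply join_le; [apply ler_addr | rewrite addC; apply ler_addr]; auto. Qed.

Definition disjoint a b := a ⊓ b = 𝟎.

Lemma disjoint_sym a b : disjoint a b -> disjoint b a.
Proof. unfold disjoint; rewrite meetC; auto. Qed.
Lemma disjointP a b : 𝟎 ≤ a -> 𝟎 ≤ b -> a ⊓ b ≤ 𝟎 -> disjoint a b.
Proof. intros. apply le_antisym; auto. apply le_meet; auto. Qed.
Lemma disjoint_le a b a' b' :
  𝟎 ≤ a' -> 𝟎 ≤ b' -> a' ≤ a -> b' ≤ b -> disjoint a b -> disjoint a' b'.
Proof.
  unfold disjoint; intros Ha Hb H1 H2 H. apply disjointP; auto.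
  rewrite <- H. apply meet_mono; auto.
Qed.
Lemma eq0_of_disjoint_le d b : d ≤ b -> disjoint d b -> d = 𝟎.
Proof. intros Hb H. unfold disjoint in H. rewrite Hb in H. exact H. Qed.
Lemma pos_neg_disjoint x : disjoint (pos_part x) (neg_part x).
Proof.
  unfold disjoint, neg_part.
  replace (⊖ x ⊔ 𝟎) with (pos_part x ⊕ ⊖ x)
    by (unfold pos_part; rewrite addJr, addrN, add0r, joinC; reflexivity).
  rewrite <- (addr0 (pos_part x)) at 1. rewrite <- addM.
  replace (𝟎 ⊓ ⊖ x) with (⊖ pos_part x) by (unfold pos_part; rewrite oppJ, opp0, meetC; reflexivity).
  apply addrN.
Qed.

Lemma meet_add_le a b c :
  𝟎 ≤ a -> 𝟎 ≤ b -> 𝟎 ≤ c -> a ⊓ (b ⊕ c) ≤ (a ⊓ b) ⊕ (a ⊓ c).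
Proof.
  intros Ha Hb Hc. rewrite (addC (a ⊓ b)). apply le_addr_iff.
  rewrite oppM, addJ. apply join_le.
  - apply (le_trans _ 𝟎); [apply (proj1 (le_sub_iff _ _)), meet_le_l | apply le_meet; auto].
  - rewrite addMr, (addC b c), <- addA, addrN, addr0.
    apply meet_mono; [apply ler_subl; auto | apply le_refl].
Qed.
Lemma disjoint_add a b c :
  𝟎 ≤ a -> 𝟎 ≤ b -> 𝟎 ≤ c -> disjoint a b -> disjoint a c -> disjoint a (b ⊕ c).
Proof.
  unfold disjoint; intros Ha Hb Hc H1 H2. apply disjointP; auto using addr_ge0.
  eapply le_trans; [apply meet_add_le; auto |]. rewrite H1, H2, addr0. apply le_refl.
Qed.

Lemma nmul1 x : nm 1 x = x. Proof. apply add0r. Qed.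
Lemma nmulD m n x : nm (m + n) x = nm m x ⊕ nm n x.
Proof.
  induction n; simpl.
  - rewrite Nat.add_0_r, addr0; reflexivity.
  - rewrite Nat.add_succ_r. simpl. rewrite IHn, addA. reflexivity.
Qed.
Lemma nmul_add n x y : nm n (x ⊕ y) = nm n x ⊕ nm n y.
Proof. induction n; simpl; [rewrite addr0 | rewrite IHn; apply addACA]; reflexivity. Qed.
Lemma nmul_opp n x : nm n (⊖ x) = ⊖ nm n x.
Proof. induction n; simpl; [rewrite opp0 | rewrite IHn, oppD]; reflexivity. Qed.
Lemma nmul_sub n x y : nm n (x ⊕ ⊖ y) = nm n x ⊕ ⊖ nm n y.
Proof. rewrite nmul_add, nmul_opp. reflexivity. Qed.
Lemma nmul0r n : nm n 𝟎 = 𝟎.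
Proof. induction n; simpl; [| rewrite IHn, addr0]; reflexivity. Qed.
Lemma nmulM m n x : nm (m * n) x = nm m (nm n x).
Proof. induction m; simpl; [| rewrite nmulD, IHm, addC]; reflexivity. Qed.
Lemma nmulC m n x : nm m (nm n x) = nm n (nm m x).
Proof. rewrite <- !nmulM, Nat.mul_comm. reflexivity. Qed.
Lemma nmul_ge0 n x : 𝟎 ≤ x -> 𝟎 ≤ nm n x.
Proof. intro H; induction n; simpl; [apply le_refl | apply addr_ge0; auto]. Qed.
Lemma nmul_le n x y : x ≤ y -> nm n x ≤ nm n y.
Proof. intro H; induction n; simpl; [apply le_refl | apply lerD; auto]. Qed.
Lemma nmul_le_n m n x : 𝟎 ≤ x -> (m <= n)%nat -> nm m x ≤ nm n x.
Proof.
  intros H Hmn. replace n with (m + (n - m))%nat by lia. rewrite nmulD.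
  apply ler_addr, nmul_ge0, H.
Qed.
Lemma le_nmul n x : 𝟎 ≤ x -> (1 <= n)%nat -> x ≤ nm n x.
Proof. intros. rewrite <- (nmul1 x) at 1. apply nmul_le_n; auto. Qed.

Lemma disjoint_nmul_r n a b : 𝟎 ≤ a -> 𝟎 ≤ b -> disjoint a b -> disjoint a (nm n b).
Proof.
  intros Ha Hb H; induction n; simpl.
  - apply disjointP; auto using le_refl. apply meet_le_r.
  - apply disjoint_add; auto using nmul_ge0.
Qed.
Lemma disjoint_nmul m n a b :
  𝟎 ≤ a -> 𝟎 ≤ b -> disjoint a b -> disjoint (nm m a) (nm n b).
Proof.
  intros. apply disjoint_nmul_r; auto using nmul_ge0.
  apply disjoint_sym, disjoint_nmul_r, disjoint_sym; auto.
Qed.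

Lemma pos_unique x p q : 𝟎 ≤ p -> 𝟎 ≤ q -> disjoint p q -> x = p ⊕ ⊖ q -> pos_part x = p.
Proof.
  intros Hp Hq Hd ->. unfold pos_part. rewrite <- (addrN q), <- addJr.
  rewrite <- (addr0 (p ⊔ q)), <- Hd, <- add_join_meet, addrK. reflexivity.
Qed.
Lemma pos_nmul n x : pos_part (nm n x) = nm n (pos_part x).
Proof.
  apply (pos_unique _ _ (nm n (neg_part x))); auto using nmul_ge0, pos_ge0, neg_ge0.
  - apply disjoint_nmul; auto using pos_ge0, neg_ge0, pos_neg_disjoint.
  - rewrite <- nmul_sub, <- pos_sub_neg. reflexivity.
Qed.
Lemma neg_nmul n x : neg_part (nm n x) = nm n (neg_part x).
Proof. unfold neg_part. rewrite <- nmul_opp. apply pos_nmul. Qed.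
Lemma nmul_join n a b : nm n (a ⊔ b) = nm n a ⊔ nm n b.
Proof. rewrite !join_pos, nmul_add, <- pos_nmul, nmul_sub. reflexivity. Qed.
Lemma nmul_meet n a b : nm n (a ⊓ b) = nm n a ⊓ nm n b.
Proof.
  rewrite <- (oppK (a ⊓ b)), oppM, nmul_opp, nmul_join, oppJ, !nmul_opp, !oppK. reflexivity.
Qed.

Definition zmul (m : Z) x := nm (Z.to_nat m) x ⊕ ⊖ nm (Z.to_nat (- m)) x.

Lemma zmul_spec m x p q : (Z.of_nat p - Z.of_nat q)%Z = m -> zmul m x = nm p x ⊕ ⊖ nm q x.
Proof. intro H. unfold zmul. apply sub_eq. rewrite <- !nmulD. f_equal. lia. Qed.
Lemma zmul_nat n x : zmul (Z.of_nat n) x = nm n x.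
Proof. rewrite (zmul_spec _ _ n 0); [| lia]. simpl. rewrite opp0, addr0. reflexivity. Qed.
Lemma nmul_zmul a m x : nm a (zmul m x) = zmul (Z.of_nat a * m) x.
Proof. unfold zmul at 1. rewrite nmul_sub, <- !nmulM. symmetry. apply zmul_spec. lia. Qed.
Lemma zmul_le m m' x : 𝟎 ≤ x -> (m <= m')%Z -> zmul m x ≤ zmul m' x.
Proof.
  intros Hx H. unfold zmul at 1.
  rewrite (zmul_spec m' x (Z.to_nat m + Z.to_nat (m' - m)) (Z.to_nat (- m))), nmulD by lia.
  rewrite addAC. apply ler_addr, nmul_ge0, Hx.
Qed.
Lemma zmulD m1 m2 x : zmul (m1 + m2) x = zmul m1 x ⊕ zmul m2 x.
Proof. unfold zmul at 2 3. rewrite sub_add_sub, <- !nmulD. apply zmul_spec. lia. Qed.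
Lemma zmulN m x : zmul (- m) x = ⊖ zmul m x.
Proof. unfold zmul at 2. rewrite opp_sub. apply zmul_spec. lia. Qed.

Lemma disjoint_pos_join d a b : 𝟎 ≤ d ->
  disjoint d (pos_part a) -> disjoint d (pos_part b) -> disjoint d (pos_part (a ⊔ b)).
Proof.
  intros Hd Ha Hb. rewrite pos_join.
  apply (disjoint_le d (pos_part a ⊕ pos_part b)); auto using le_refl, join_le_add, pos_ge0.
  - eapply le_trans; [apply pos_ge0 | apply join_ge_l].
  - apply disjoint_add; auto using pos_ge0.
Qed.

Lemma disjoint_pos_of_nmul_le d u a b N : (1 <= N)%nat -> 𝟎 ≤ d ->
  nm N u ≤ a ⊕ b -> disjoint d (pos_part a) -> disjoint d (pos_part b) ->
  disjoint d (pos_part u).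
Proof.
  intros HN Hd Hle Ha Hb.
  apply (disjoint_le d (pos_part a ⊕ pos_part b)); auto using pos_ge0, le_refl.
  - eapply le_trans; [apply le_nmul, HN; apply pos_ge0 |].
    rewrite <- pos_nmul. eapply le_trans; [apply pos_mono, Hle | apply pos_add_le].
  - apply disjoint_add; auto using pos_ge0.
Qed.

Lemma le_nmul_of_disjoint_excess h x e n : 𝟎 ≤ h -> 𝟎 ≤ x -> 𝟎 ≤ e ->
  disjoint h (pos_part (x ⊕ ⊖ e)) -> h ≤ nm n x -> h ≤ nm n e.
Proof.
  intros Hh Hx He Hd Hle.
  assert (Hsplit : x = (x ⊓ e) ⊕ pos_part (x ⊕ ⊖ e))
    by (rewrite pos_sub_meet, addCA, addrN, addr0; reflexivity).
  rewrite Hsplit, nmul_add in Hle. rewrite <- Hle.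
  eapply le_trans; [apply meet_add_le; auto using nmul_ge0, pos_ge0, le_meet |].
  rewrite (disjoint_nmul_r n h (pos_part (x ⊕ ⊖ e))), addr0; auto using pos_ge0.
  eapply le_trans; [apply meet_le_r | apply nmul_le, meet_le_r].
Qed.

Lemma decreasing_le (zs : nat -> A) : (forall N, zs (S N) ≤ zs N) ->
  forall N M, (N <= M)%nat -> zs M ≤ zs N.
Proof. intros H N M HM. induction HM; [apply le_refl | eapply le_trans; eauto]. Qed.

Lemma lb_nmul_decreasing_le0 c (zs : nat -> A) k :
  (forall N, zs (S N) ≤ zs N) -> (forall b, (forall N, b ≤ zs N) -> b ≤ 𝟎) ->
  (forall N, c ≤ nm k (zs N)) -> c ≤ 𝟎.
Proof.
  intros Hdec Hinf. induction k; intro Hc; [apply (Hc 0%nat) |].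
  apply IHk. intro N. apply (proj2 (le_sub_iff _ _)), Hinf. intro M.
  apply le_addr_iff. rewrite addC.
  apply (le_trans _ _ _ (Hc (Nat.max N M))). simpl.
  apply lerD; [apply nmul_le |]; apply decreasing_le; auto; lia.
Qed.

Lemma absv_ge0 x : 𝟎 ≤ absv A x.
Proof.
  unfold absv. set (y := x ⊔ ⊖ x).
  assert (H2 : 𝟎 ≤ nm 2 y)
    by (simpl; rewrite add0r, <- (addrN x); apply lerD; [apply join_ge_l | apply join_ge_r]).
  assert (Hn : neg_part y = 𝟎).
  { apply le_antisym; [| apply neg_ge0].
    rewrite <- (neg_eq0 _ H2), neg_nmul. apply le_nmul; [apply neg_ge0 | lia]. }
  rewrite (pos_sub_neg y), Hn, opp0, addr0. apply pos_ge0.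
Qed.
Lemma absv_eq0 x : absv A x = 𝟎 -> x = 𝟎.
Proof.
  unfold absv. intro H. apply le_antisym.
  - rewrite <- H. apply join_ge_l.
  - rewrite <- lerN2_iff, opp0, <- H. apply join_ge_r.
Qed.
Lemma absv_id x : 𝟎 ≤ x -> absv A x = x.
Proof.
  intro H. unfold absv. rewrite joinC. apply le_join_iff.
  apply (le_trans _ 𝟎); [rewrite <- opp0; apply lerN2 |]; exact H.
Qed.

Section SigmaComplete.
Hypothesis HS : sigma_axioms A.
Local Notation sm := (supm A).

Definition is_sup (y : nat -> A) (s : A) :=
  (forall n, y n ≤ s) /\ (forall h, (forall n, y n ≤ h) -> s ≤ h).

Lemma supm_ub g f n : f n ⊓ g ≤ sm (scons g f).
Proof.
  destruct HS as [_ [HA2 _]]. revert f; induction n; intro f; rewrite HA2;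
    [apply join_ge_l | eapply le_trans; [apply (IHn (fun n => f (S n))) | apply join_ge_r]].
Qed.
Lemma supm_least g f h : (forall n, f n ⊓ g ≤ h) -> sm (scons g f) ≤ h.
Proof.
  intro H. destruct HS as [HA1 [_ HA3]]. rewrite HA1.
  replace (fun n => f n ⊓ g) with (fun n => f n ⊓ g ⊓ h)
    by (apply functional_extensionality; intro; apply H).
  apply HA3.
Qed.
Lemma supm_is_sup g f : is_sup (fun n => f n ⊓ g) (sm (scons g f)).
Proof. split; [apply supm_ub | intros; apply supm_least; auto]. Qed.
Lemma supm_is_sup_bounded g y : (forall n, y n ≤ g) -> is_sup y (sm (scons g y)).
Proof.
  intro H. destruct (supm_is_sup g y) as [H1 H2].
  split; [intro n; rewrite <- (H n) | intros h Hh; apply H2; intro n; rewrite (H n)]; auto.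
Qed.
Lemma supm_scons s : sm s = sm (scons (s 0%nat) (fun n => s (S n))).
Proof. f_equal. apply functional_extensionality; intros [|n]; reflexivity. Qed.

Lemma is_sup_meet a y s : is_sup y s -> is_sup (fun n => a ⊓ y n) (a ⊓ s).
Proof.
  intros [H1 H2]. split; [intro n; apply meet_mono; auto using le_refl |].
  intros u Hu.
  assert (Hs : s ≤ u ⊕ (a ⊔ s) ⊕ ⊖ a).
  { apply H2. intro n. rewrite (decomp_meet_join a (y n)). apply lerD2r, lerD;
      [apply Hu | apply join_mono; auto using le_refl]. }
  rewrite (decomp_meet_join a s) in Hs at 1.
  apply (lerD2r a), (lerD2r (⊖ (a ⊔ s))) in Hs. rewrite !addrNK, !addrK in Hs. exact Hs.
Qed.

Lemma archimedean d x : 𝟎 ≤ d -> (forall n, nm n d ≤ x) -> d = 𝟎.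
Proof.
  intros Hd Hn. destruct (supm_is_sup_bounded x _ Hn) as [H1 H2].
  set (s := sm (scons x (fun n => nm n d))) in *.
  assert (H : s ≤ s ⊕ ⊖ d) by (apply H2; intro n; apply le_subr_iff, (H1 (S n))).
  apply le_antisym; auto. apply le_subr_iff in H.
  rewrite <- (addr0 s) in H at 2. apply lerD2l_inv in H. exact H.
Qed.

Definition partial_join (y : nat -> A) : nat -> A :=
  fix pj N := match N with O => y O | S N' => pj N' ⊔ y (S N') end.

Lemma partial_join_ge y n : y n ≤ partial_join y n.
Proof. destruct n; [apply le_refl | apply join_ge_r]. Qed.
Lemma partial_join_le y s : is_sup y s -> forall N, partial_join y N ≤ s.
Proof. intros [Hub _]; induction N; [apply Hub | apply join_le; auto]. Qed.

Lemma sup_sub_partial_join_inf y s : is_sup y s ->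
  forall b, (forall N, b ≤ s ⊕ ⊖ partial_join y N) -> b ≤ 𝟎.
Proof.
  intros Hsup b Hb.
  assert (Hs : s ≤ s ⊕ ⊖ b).
  { apply (proj2 Hsup). intro n. eapply le_trans; [apply partial_join_ge |].
    specialize (Hb n). apply le_subr_iff in Hb. rewrite addC in Hb. apply le_subr_iff, Hb. }
  apply le_subr_iff in Hs. rewrite <- (addr0 s) in Hs at 2. apply lerD2l_inv in Hs. exact Hs.
Qed.

Section Band.
Variable e : A.
Hypothesis He : 𝟎 ≤ e.

(** [band_comp w] is the component of [e] in the band generated by [pos_part w]. *)
Definition band_comp w := sm (scons e (fun n => nm n (pos_part w))).

Lemma band_comp_sup w : is_sup (fun n => nm n (pos_part w) ⊓ e) (band_comp w).
Proof. apply supm_is_sup. Qed.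
Lemma band_comp_ub w n : nm n (pos_part w) ⊓ e ≤ band_comp w.
Proof. apply (proj1 (band_comp_sup w)). Qed.
Lemma band_comp_ge0 w : 𝟎 ≤ band_comp w.
Proof. assert (H := band_comp_ub w 0). simpl in H. rewrite He in H. exact H. Qed.
Lemma band_comp_le w : band_comp w ≤ e.
Proof. apply (proj2 (band_comp_sup w)). intro; apply meet_le_r. Qed.
Lemma compl_ge0 b : b ≤ e -> 𝟎 ≤ e ⊕ ⊖ b.
Proof. apply subr_ge0_iff. Qed.
Lemma compl_le b : 𝟎 ≤ b -> e ⊕ ⊖ b ≤ e.
Proof. apply ler_subl. Qed.

Lemma disjoint_band_comp d w : 𝟎 ≤ d -> disjoint d (pos_part w) -> disjoint d (band_comp w).
Proof.
  intros Hd H. apply disjointP; auto using band_comp_ge0.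
  apply (proj2 (is_sup_meet d _ _ (band_comp_sup w))). intro n.
  eapply le_trans; [apply meet_mono; [apply le_refl | apply meet_le_l] |].
  rewrite (disjoint_nmul_r n d (pos_part w)); auto using pos_ge0, le_refl.
Qed.
Lemma disjoint_pos_of_band_comp d w : 𝟎 ≤ d -> d ≤ e ->
  disjoint d (band_comp w) -> disjoint d (pos_part w).
Proof.
  intros Hd Hde H. apply disjointP; auto using pos_ge0.
  rewrite <- H. rewrite <- (Hde : d ⊓ e = d) at 1. rewrite <- meetA, (meetC e).
  apply meet_mono; [apply le_refl |].
  rewrite <- (nmul1 (pos_part w)). apply band_comp_ub.
Qed.
Lemma band_comp_neg_disjoint w : disjoint (band_comp w) (neg_part w).
Proof.
  apply disjoint_sym, disjoint_band_comp; [apply neg_ge0 | apply disjoint_sym, pos_neg_disjoint].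
Qed.

Lemma compl_band_comp_le w j : e ⊕ ⊖ band_comp w ≤ pos_part (e ⊕ ⊖ nm j (pos_part w)).
Proof. rewrite pos_sub_meet. apply lerD2l, lerN2. rewrite meetC. apply band_comp_ub. Qed.

Lemma band_comp_compl_disjoint w : disjoint (band_comp w) (e ⊕ ⊖ band_comp w).
Proof.
  set (p := pos_part w). set (c := e ⊕ ⊖ band_comp w).
  assert (Hc : 𝟎 ≤ c) by apply compl_ge0, band_comp_le.
  assert (Hp : 𝟎 ≤ p) by apply pos_ge0.
  apply disjoint_sym, disjointP; auto using band_comp_ge0.
  apply (proj2 (is_sup_meet c _ _ (band_comp_sup w))). intro n.
  eapply le_trans; [apply meet_mono; [apply le_refl | apply meet_le_l] |]. fold p.
  assert (Hh : 𝟎 ≤ c ⊓ nm n p) by (apply le_meet; auto using nmul_ge0).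
  (* [j (c ⊓ n p) ≤ n e] for all [j], because [c] lies under [(e - j p)^+]. *)
  rewrite (archimedean (c ⊓ nm n p) (nm n e)); auto using le_refl. intro j.
  apply (le_nmul_of_disjoint_excess _ (nm j p)); auto using nmul_ge0.
  - apply disjoint_sym, disjoint_nmul_r; auto using pos_ge0.
    apply (disjoint_le (pos_part (nm j p ⊕ ⊖ e)) (neg_part (nm j p ⊕ ⊖ e)));
      auto using pos_ge0, le_refl, pos_neg_disjoint.
    rewrite neg_sub. apply meet_le_trans_l, compl_band_comp_le.
  - rewrite nmulC. apply nmul_le, meet_le_r.
Qed.

Lemma band_comp_le_of_pos_le w w' N : pos_part w ≤ nm N (pos_part w') -> band_comp w ≤ band_comp w'.
Proof.
  intro H. apply (proj2 (band_comp_sup w)). intro n.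
  eapply le_trans; [| apply (band_comp_ub w' (n * N))].
  apply meet_mono; [rewrite nmulM; apply nmul_le, H | apply le_refl].
Qed.
Lemma band_comp_meet w w' : band_comp w ⊓ band_comp w' ≤ band_comp (w ⊓ w').
Proof.
  rewrite meetC. apply (proj2 (is_sup_meet _ _ _ (band_comp_sup w))). intro n.
  rewrite meetC. apply (proj2 (is_sup_meet _ _ _ (band_comp_sup w'))). intro m.
  eapply le_trans; [| apply (band_comp_ub _ (Nat.max n m))].
  rewrite pos_meet, nmul_meet. repeat apply le_meet.
  - do 2 apply meet_le_trans_l. apply nmul_le_n; auto using pos_ge0; lia.
  - eapply le_trans; [apply meet_le_r |]. apply meet_le_trans_l, nmul_le_n; auto using pos_ge0; lia.
  - apply meet_le_trans_l, meet_le_r.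
Qed.
Lemma band_comp_eq0 w : pos_part w = 𝟎 -> band_comp w = 𝟎.
Proof.
  intro H. apply le_antisym; [| apply band_comp_ge0].
  apply (proj2 (band_comp_sup _)). intro n. rewrite H, nmul0r. apply meet_le_l.
Qed.
Lemma band_comp_e : band_comp e = e.
Proof.
  apply le_antisym; [apply band_comp_le |].
  eapply le_trans; [| apply (band_comp_ub _ 1)]. rewrite nmul1, pos_id, meetxx; auto using le_refl.
Qed.

Lemma le_of_disjoint_compl a b : 𝟎 ≤ a -> a ≤ e -> 𝟎 ≤ b -> b ≤ e ->
  disjoint a (e ⊕ ⊖ b) -> a ≤ b.
Proof.
  intros Ha Hae Hb Hbe H.
  apply (le_trans _ (a ⊓ (b ⊕ (e ⊕ ⊖ b)))).
  - rewrite addCA, addrN, addr0. apply le_meet; auto using le_refl.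
  - eapply le_trans; [apply meet_add_le; auto using compl_ge0 |].
    rewrite H, addr0. apply meet_le_r.
Qed.

Definition excess K x m := nm K x ⊕ ⊖ zmul m e.

Lemma nmul_excess a K x m : nm a (excess K x m) = excess (a * K) x (Z.of_nat a * m).
Proof. unfold excess. rewrite nmul_sub, nmulM, nmul_zmul. reflexivity. Qed.
Lemma excess_le K x m m' : (m' <= m)%Z -> excess K x m ≤ excess K x m'.
Proof. intro H. apply lerD2l, lerN2, zmul_le; auto. Qed.
Lemma excess_mono K x y m : x ≤ y -> excess K x m ≤ excess K y m.
Proof. intro; apply lerD2r, nmul_le; auto. Qed.
Lemma excess_add K x y m1 m2 : excess K x m1 ⊕ excess K y m2 = excess K (x ⊕ y) (m1 + m2).
Proof. unfold excess. rewrite sub_add_sub, nmul_add, zmulD. reflexivity. Qed.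
Lemma excess_meet K x y m : excess K (x ⊓ y) m = excess K x m ⊓ excess K y m.
Proof. unfold excess. rewrite nmul_meet, addMr. reflexivity. Qed.
Lemma excess_join K x y m : excess K (x ⊔ y) m = excess K x m ⊔ excess K y m.
Proof. unfold excess. rewrite nmul_join, addJr. reflexivity. Qed.
Lemma excess_sum K1 K2 K3 x y m1 m2 :
  nm (K2 * K3) (excess K1 x m1) ⊕ nm (K1 * K3) (excess K2 y m2) =
  excess (K1 * K2 * K3) (x ⊕ y) (Z.of_nat (K2 * K3) * m1 + Z.of_nat (K1 * K3) * m2).
Proof.
  rewrite !nmul_excess.
  replace (K2 * K3 * K1)%nat with (K1 * K2 * K3)%nat by lia.
  replace (K1 * K3 * K2)%nat with (K1 * K2 * K3)%nat by lia. apply excess_add.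
Qed.

(** [level x m k] is the part of [e] on which [x] exceeds [frac m k] times [e]. *)
Definition level x (m : Z) (k : nat) := band_comp (excess (S k) x m).

Lemma level_ge0 x m k : 𝟎 ≤ level x m k. Proof. apply band_comp_ge0. Qed.
Lemma level_le x m k : level x m k ≤ e. Proof. apply band_comp_le. Qed.
Lemma level_compl_disjoint x m k : disjoint (level x m k) (e ⊕ ⊖ level x m k).
Proof. apply band_comp_compl_disjoint. Qed.
Lemma compl_level_ge0 x m k : 𝟎 ≤ e ⊕ ⊖ level x m k. Proof. apply compl_ge0, level_le. Qed.
Lemma compl_level_le x m k : e ⊕ ⊖ level x m k ≤ e. Proof. apply compl_le, level_ge0. Qed.

Lemma level_antitone x m k m' k' : frac m' k' <= frac m k -> level x m k ≤ level x m' k'.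
Proof.
  intro H. apply frac_le in H. apply (band_comp_le_of_pos_le _ _ (S k)).
  eapply le_trans; [apply (le_nmul (S k')); [apply pos_ge0 | lia] |].
  rewrite <- !pos_nmul. apply pos_mono. rewrite !nmul_excess, Nat.mul_comm.
  apply excess_le. lia.
Qed.
Lemma level_mono x y m k : x ≤ y -> level x m k ≤ level y m k.
Proof.
  intro H. apply (band_comp_le_of_pos_le _ _ 1). rewrite nmul1. apply pos_mono, excess_mono, H.
Qed.
Lemma level_meet x y m k : level x m k ⊓ level y m k ≤ level (x ⊓ y) m k.
Proof. unfold level. rewrite excess_meet. apply band_comp_meet. Qed.

Lemma disjoint_pos_of_le_compl d x m k : 𝟎 ≤ d -> d ≤ e ⊕ ⊖ level x m k ->
  disjoint d (pos_part (excess (S k) x m)).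
Proof.
  intros Hd H. apply disjoint_pos_of_band_comp; auto.
  - eapply le_trans; [apply H | apply compl_level_le].
  - apply disjoint_sym, (disjoint_le (level x m k) (e ⊕ ⊖ level x m k));
      auto using band_comp_ge0, compl_level_ge0, le_refl, level_compl_disjoint.
Qed.
Lemma disjoint_neg_of_le_level d x m k : 𝟎 ≤ d -> d ≤ level x m k ->
  disjoint d (neg_part (excess (S k) x m)).
Proof.
  intros Hd H. apply (disjoint_le (level x m k) (neg_part (excess (S k) x m)));
    auto using level_ge0, neg_ge0, le_refl; apply band_comp_neg_disjoint.
Qed.

Lemma level_add_lower x y m1 k1 m2 k2 m3 k3 :
  frac m3 k3 <= frac m1 k1 + frac m2 k2 ->
  disjoint (level x m1 k1 ⊓ level y m2 k2) (e ⊕ ⊖ level (x ⊕ y) m3 k3).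
Proof.
  intro Hq. apply frac_le_add in Hq. rewrite <- !Nat2Z.inj_mul in Hq.
  set (d := level x m1 k1 ⊓ level y m2 k2 ⊓ (e ⊕ ⊖ level (x ⊕ y) m3 k3)).
  assert (Hd : 𝟎 ≤ d) by (repeat apply le_meet; auto using level_ge0, compl_level_ge0).
  assert (Hd1 : d ≤ level x m1 k1) by (do 2 apply meet_le_trans_l; apply le_refl).
  apply (eq0_of_disjoint_le d (level x m1 k1)); auto.
  apply disjoint_band_comp; auto.
  apply (disjoint_pos_of_nmul_le _ _ (nm (S k1 * S k2) (excess (S k3) (x ⊕ y) m3))
           (⊖ nm (S k1 * S k3) (excess (S k2) y m2)) (S k2 * S k3)); auto; [nia | | |].
  - apply (proj1 (le_subr_iff _ _ _)). rewrite excess_sum, nmul_excess. apply excess_le. lia.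
  - rewrite pos_nmul. apply disjoint_nmul_r; auto using pos_ge0.
    apply disjoint_pos_of_le_compl; auto. apply meet_le_r.
  - change (pos_part (⊖ ?u)) with (neg_part u). rewrite neg_nmul.
    apply disjoint_nmul_r; auto using neg_ge0.
    apply disjoint_neg_of_le_level; auto. apply meet_le_trans_l, meet_le_r.
Qed.

Lemma level_add_upper x y m1 k1 m2 k2 m3 k3 :
  frac m1 k1 + frac m2 k2 <= frac m3 k3 ->
  disjoint ((e ⊕ ⊖ level x m1 k1) ⊓ (e ⊕ ⊖ level y m2 k2)) (level (x ⊕ y) m3 k3).
Proof.
  intro Hq. apply frac_add_le in Hq. rewrite <- !Nat2Z.inj_mul in Hq.
  set (d := (e ⊕ ⊖ level x m1 k1) ⊓ (e ⊕ ⊖ level y m2 k2) ⊓ level (x ⊕ y) m3 k3).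
  assert (Hd : 𝟎 ≤ d) by (repeat apply le_meet; auto using level_ge0, compl_level_ge0).
  apply (eq0_of_disjoint_le d (level (x ⊕ y) m3 k3)); [apply meet_le_r |].
  apply disjoint_band_comp; auto.
  apply (disjoint_pos_of_nmul_le _ _ (nm (S k2 * S k3) (excess (S k1) x m1))
           (nm (S k1 * S k3) (excess (S k2) y m2)) (S k1 * S k2)); auto; [nia | | |].
  - rewrite excess_sum, nmul_excess. rewrite (Nat.mul_comm (S k1 * S k2)). apply excess_le. lia.
  - rewrite pos_nmul. apply disjoint_nmul_r; auto using pos_ge0.
    apply disjoint_pos_of_le_compl; auto. do 2 apply meet_le_trans_l. apply le_refl.
  - rewrite pos_nmul. apply disjoint_nmul_r; auto using pos_ge0.
    apply disjoint_pos_of_le_compl; auto. apply meet_le_trans_l, meet_le_r.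
Qed.

Lemma level_join_upper x y m k :
  disjoint ((e ⊕ ⊖ level x m k) ⊓ (e ⊕ ⊖ level y m k)) (level (x ⊔ y) m k).
Proof.
  set (d := (e ⊕ ⊖ level x m k) ⊓ (e ⊕ ⊖ level y m k) ⊓ level (x ⊔ y) m k).
  assert (Hd : 𝟎 ≤ d) by (repeat apply le_meet; auto using level_ge0, compl_level_ge0).
  apply (eq0_of_disjoint_le d (level (x ⊔ y) m k)); [apply meet_le_r |].
  apply disjoint_band_comp; auto.
  rewrite excess_join. apply disjoint_pos_join; auto; apply disjoint_pos_of_le_compl; auto;
    [do 2 apply meet_le_trans_l; apply le_refl | apply meet_le_trans_l, meet_le_r].
Qed.

Lemma excess1 x m : excess 1 x m = x ⊕ ⊖ zmul m e.
Proof. unfold excess. rewrite nmul1. reflexivity. Qed.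
Lemma excess_zmul K j m : excess K (zmul j e) m = zmul (Z.of_nat K * j - m) e.
Proof. unfold excess. rewrite nmul_zmul, <- zmulN, <- zmulD. f_equal. Qed.
Lemma band_comp_zmul j : band_comp (zmul j e) = if (0 <? j)%Z then e else 𝟎.
Proof.
  destruct (Z.ltb_spec 0 j).
  - rewrite (zmul_spec j e (Z.to_nat j) 0) by lia. simpl. rewrite opp0, addr0.
    apply le_antisym; [apply band_comp_le |]. rewrite <- band_comp_e at 1.
    apply (band_comp_le_of_pos_le _ _ 1). rewrite nmul1, !pos_id; auto using nmul_ge0.
    apply le_nmul; auto; lia.
  - rewrite (zmul_spec j e 0 (Z.to_nat (- j))) by lia. simpl. rewrite add0r.
    apply band_comp_eq0, pos_eq0. rewrite <- opp0. apply lerN2, nmul_ge0, He.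
Qed.
Lemma level_e m k : level e m k = if (m <? Z.of_nat (S k))%Z then e else 𝟎.
Proof.
  unfold level. rewrite <- (nmul1 e) at 1. rewrite <- zmul_nat, excess_zmul, band_comp_zmul.
  destruct (Z.ltb_spec 0 (Z.of_nat (S k) * Z.of_nat 1 - m)), (Z.ltb_spec m (Z.of_nat (S k)));
    reflexivity || lia.
Qed.
Lemma level_zero m k : level 𝟎 m k = if (m <? 0)%Z then e else 𝟎.
Proof.
  unfold level. rewrite <- (zmul_nat 0 e) at 1. rewrite excess_zmul, band_comp_zmul.
  destruct (Z.ltb_spec 0 (Z.of_nat (S k) * Z.of_nat 0 - m)), (Z.ltb_spec m 0); reflexivity || lia.
Qed.

Definition covering (F : nat -> A) :=
  forall d, 𝟎 ≤ d -> d ≤ e -> (forall n, disjoint d (F n)) -> d = 𝟎.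

Lemma covering_level_dichotomy x m k :
  covering (scons (level x m k) (fun _ => e ⊕ ⊖ level x m k)).
Proof.
  intros d Hd Hde H. apply (eq0_of_disjoint_le d (level x m k)); [| apply (H 0%nat)].
  apply le_of_disjoint_compl; auto using level_ge0, level_le. apply (H 1%nat).
Qed.

Lemma eq0_of_disjoint_pos_sub d y : 𝟎 ≤ d -> d ≤ e ->
  (forall n, disjoint d (pos_part (nm n e ⊕ ⊖ y))) -> d = 𝟎.
Proof.
  intros Hd Hde H. apply (archimedean d (pos_part y)); auto. intro n.
  rewrite <- (nmul1 (pos_part y)).
  apply (le_nmul_of_disjoint_excess _ (nm n e)); auto using nmul_ge0, pos_ge0.
  - apply (disjoint_le (nm n d) (pos_part (nm n e ⊕ ⊖ y))); auto using le_refl, pos_ge0, nmul_ge0.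
    + apply pos_mono, lerD2l, lerN2, le_pos.
    + apply disjoint_sym, disjoint_nmul_r, disjoint_sym; auto using pos_ge0.
  - rewrite nmul1. apply nmul_le, Hde.
Qed.

Lemma covering_level_upper x : covering (fun n => e ⊕ ⊖ level x (Z.of_nat n) 0).
Proof.
  intros d Hd Hde H. apply (eq0_of_disjoint_pos_sub d x); auto. intro n.
  assert (Hle : d ≤ level x (Z.of_nat n) 0)
    by (apply le_of_disjoint_compl; auto using level_ge0, level_le).
  pose proof (disjoint_neg_of_le_level _ _ _ _ Hd Hle) as Hn.
  rewrite excess1, zmul_nat, neg_sub in Hn. exact Hn.
Qed.

Lemma covering_level_lower x : covering (fun n => level x (- Z.of_nat n) 0).
Proof.
  intros d Hd Hde H. apply (eq0_of_disjoint_pos_sub d (⊖ x)); auto. intro n.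
  pose proof (disjoint_pos_of_band_comp _ _ Hd Hde (H n)) as Hn.
  rewrite excess1, zmulN, zmul_nat, oppK, addC in Hn. rewrite oppK. exact Hn.
Qed.

Lemma disjoint_pos_excess_sup d y s K m : 𝟎 ≤ d -> is_sup y s ->
  (forall n, disjoint d (pos_part (excess K (y n) m))) -> disjoint d (pos_part (excess K s m)).
Proof.
  intros Hd Hsup H.
  assert (Hpj : forall N, disjoint d (pos_part (excess K (partial_join y N) m)))
    by (induction N; simpl; auto; rewrite excess_join; apply disjoint_pos_join; auto).
  apply disjointP; auto using pos_ge0.
  apply (lb_nmul_decreasing_le0 _ (fun N => s ⊕ ⊖ partial_join y N) K).
  - intro N. apply lerD2l, lerN2, join_ge_l.
  - apply sup_sub_partial_join_inf, Hsup.
  - intro N.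
    assert (Hz : 𝟎 ≤ s ⊕ ⊖ partial_join y N)
      by (apply (proj1 (subr_ge0_iff _ _)), partial_join_le, Hsup).
    replace (excess K s m) with (excess K (partial_join y N) m ⊕ nm K (s ⊕ ⊖ partial_join y N))
      by (unfold excess; rewrite nmul_sub, (addC (nm K _ ⊕ _)), <- addA, addKr; reflexivity).
    eapply le_trans; [apply meet_mono; [apply le_refl | apply pos_add_le] |].
    rewrite (pos_id (nm K _)) by (apply nmul_ge0, Hz).
    eapply le_trans; [apply meet_add_le; auto using pos_ge0, nmul_ge0 |].
    rewrite (Hpj N), add0r. apply meet_le_r.
Qed.

Lemma covering_supm g f m k :
  covering (scons (e ⊕ ⊖ level (sm (scons g f)) m k) (fun n => level (f n ⊓ g) m k)).
Proof.
  intros d Hd Hde H.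
  apply (eq0_of_disjoint_le d (level (sm (scons g f)) m k)).
  - apply le_of_disjoint_compl; auto using level_ge0, level_le. apply (H 0%nat).
  - apply disjoint_band_comp; auto.
    apply (disjoint_pos_excess_sup _ (fun n => f n ⊓ g)); auto using supm_is_sup.
    intro n. apply disjoint_pos_of_band_comp; auto. apply (H (S n)).
Qed.

Lemma covering_pos c : 𝟎 ≤ c ->
  covering (scons (e ⊕ ⊖ band_comp c) (fun n => level c 1 n)).
Proof.
  intros Hc d Hd Hde H.
  assert (Hdc : d ⊓ c = 𝟎).
  { apply (archimedean _ e); [apply le_meet; auto |]. intros [|n]; [exact He |].
    rewrite <- (nmul1 e).
    apply (le_nmul_of_disjoint_excess _ (nm (S n) c)); auto using nmul_ge0, le_meet.
    - apply (disjoint_le (nm (S n) d) (pos_part (nm (S n) c ⊕ ⊖ e)));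
        auto using nmul_ge0, le_meet, pos_ge0, le_refl, nmul_le, meet_le_l.
      apply disjoint_sym, disjoint_nmul_r, disjoint_sym; auto using pos_ge0.
      pose proof (disjoint_pos_of_band_comp _ _ Hd Hde (H (S n))) as Hn.
      unfold excess in Hn. rewrite (zmul_nat 1), nmul1 in Hn. exact Hn.
    - rewrite nmul1. apply nmul_le, meet_le_r. }
  apply (eq0_of_disjoint_le d (band_comp c)).
  - apply le_of_disjoint_compl; auto using band_comp_ge0, band_comp_le. apply (H 0%nat).
  - apply disjoint_band_comp; auto. rewrite pos_id; auto.
Qed.

Definition nonzero_part d := 𝟎 ≤ d /\ d ≤ e /\ d <> 𝟎.

Definition is_filter (U : A -> Prop) :=
  (forall b b', U b -> b ≤ b' -> U b') /\ (forall b b', U b -> U b' -> U (b ⊓ b')) /\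
  (forall b, U b -> ~ b ≤ 𝟎).

Section RasiowaSikorski.
Variable F : nat -> nat -> A.
Hypothesis HF0 : forall k n, 𝟎 ≤ F k n.
Hypothesis HF : forall k, covering (F k).

Lemma refine_nonzero_part k (d : {d | nonzero_part d}) :
  exists n, nonzero_part (proj1_sig d ⊓ F k n).
Proof.
  destruct d as [d [Hd [Hde Hne]]]; simpl.
  apply NNPP. intro Hn. apply Hne, (HF k d); auto. intro n.
  apply NNPP. intro Hdn. apply Hn. exists n.
  repeat split; auto using le_meet, meet_le_trans_l.
Qed.

Fixpoint refinement (d0 : {d | nonzero_part d}) (k : nat) : {d | nonzero_part d} :=
  match k with
  | O => d0
  | S k' =>
    let d := refinement d0 k' in
    let (n, Hn) := constructive_indefinite_description _ (refine_nonzero_part k' d) in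
    exist _ _ Hn
  end.

Lemma refinement_S d0 k : exists n,
  proj1_sig (refinement d0 (S k)) = proj1_sig (refinement d0 k) ⊓ F k n.
Proof. simpl. destruct (constructive_indefinite_description _ _) as [n Hn]. exists n. reflexivity. Qed.

Theorem rasiowa_sikorski d0 : nonzero_part d0 ->
  exists U, is_filter U /\ U d0 /\ forall k, exists n, U (F k n).
Proof.
  intro H0. set (dk := fun k => proj1_sig (refinement (exist _ d0 H0) k)).
  assert (Hdec : forall k, dk (S k) ≤ dk k).
  { intro k. destruct (refinement_S (exist _ d0 H0) k) as [n Hn].
    unfold dk. rewrite Hn. apply meet_le_l. }
  exists (fun b => exists k, dk k ≤ b). repeat split.
  - intros b b' [k Hk] Hb. exists k. eapply le_trans; eauto.
  - intros b b' [k Hk] [k' Hk']. exists (Nat.max k k').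
    apply le_meet; [apply (le_trans _ (dk k)) | apply (le_trans _ (dk k'))]; auto;
      apply decreasing_le; auto; lia.
  - intros b [k Hk] Hb. destruct (proj2_sig (refinement (exist _ d0 H0) k)) as [Hd [_ Hne]].
    apply Hne, le_antisym; [eapply le_trans; eauto | exact Hd].
  - exists 0%nat. apply le_refl.
  - intro k. destruct (refinement_S (exist _ d0 H0) k) as [n Hn].
    exists n, (S k). unfold dk. rewrite Hn. apply meet_le_r.
Qed.
End RasiowaSikorski.

Section FilterValue.
Variable U : A -> Prop.
Hypothesis HU : is_filter U.

Lemma filter_mono b b' : U b -> b ≤ b' -> U b'. Proof. apply HU. Qed.
Lemma filter_meet b b' : U b -> U b' -> U (b ⊓ b'). Proof. apply HU. Qed.
Lemma filter_not_disjoint a b : U a -> U b -> ~ disjoint a b.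
Proof.
  intros Ha Hb H. apply (proj2 (proj2 HU) (a ⊓ b));
    [apply filter_meet; auto | rewrite H; apply le_refl].
Qed.
Lemma filter_level_antitone x m k m' k' :
  U (level x m k) -> frac m' k' <= frac m k -> U (level x m' k').
Proof. intros H Hq. eapply filter_mono; [apply H | apply level_antitone, Hq]. Qed.

(** The value of [x] at [U] is the supremum of the rationals [q] whose level
    belongs to [U] (junk value [0] when this set is empty or unbounded). *)
Definition thresholds x (r : R) := exists m k, r = frac m k /\ U (level x m k).
Definition value x : R :=
  match excluded_middle_informative (bound (thresholds x) /\ exists r, thresholds x r) with
  | left H => proj1_sig (completeness _ (proj1 H) (proj2 H))
  | right _ => 0
  end.

Definition finite_at x := (exists m k, U (level x m k)) /\ (exists m k, ~ U (level x m k)).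
Definition decided_at x := forall m k, U (level x m k) \/ U (e ⊕ ⊖ level x m k).

Lemma thresholds_ub x m k : ~ U (level x m k) -> is_upper_bound (thresholds x) (frac m k).
Proof.
  intros H r [m' [k' [-> Hu]]]. destruct (Rle_lt_dec (frac m' k') (frac m k)); auto.
  exfalso. apply H. apply (filter_level_antitone x m' k'); auto. lra.
Qed.
Lemma value_lub x : finite_at x -> is_lub (thresholds x) (value x).
Proof.
  intros [[m [k Hin]] [m' [k' Hout]]]. unfold value.
  destruct (excluded_middle_informative _) as [H | H].
  - apply (proj2_sig (completeness _ _ _)).
  - exfalso. apply H.
    split; [exists (frac m' k'); apply thresholds_ub, Hout | exists (frac m k), m, k; auto].
Qed.
Lemma frac_le_value x m k : finite_at x -> U (level x m k) -> frac m k <= value x.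
Proof. intros Hf H. apply (proj1 (value_lub x Hf)). exists m, k; auto. Qed.
Lemma level_of_lt_value x m k : finite_at x -> frac m k < value x -> U (level x m k).
Proof.
  intros Hf H. apply NNPP. intro Hn.
  pose proof (proj2 (value_lub x Hf) _ (thresholds_ub _ _ _ Hn)). lra.
Qed.
Lemma value_le x b : finite_at x -> (forall m k, U (level x m k) -> frac m k <= b) -> value x <= b.
Proof. intros Hf H. apply (proj2 (value_lub x Hf)). intros r [m [k [-> Hu]]]. auto. Qed.
Lemma value_ge x a : finite_at x -> (forall m k, frac m k < a -> U (level x m k)) -> a <= value x.
Proof.
  intros Hf H. destruct (Rle_lt_dec a (value x)) as [| Hlt]; auto.
  destruct (frac_dense _ _ Hlt) as [m [k [H1 H2]]].
  apply (frac_le_value x m k Hf) in H; lra.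
Qed.
Lemma compl_of_not_level x m k : decided_at x -> ~ U (level x m k) -> U (e ⊕ ⊖ level x m k).
Proof. intros H Hn. destruct (H m k); tauto. Qed.

Lemma value_mono x y : finite_at x -> finite_at y -> x ≤ y -> value x <= value y.
Proof.
  intros Hx Hy H. apply value_le; auto. intros m k Hu. apply frac_le_value; auto.
  eapply filter_mono; [apply Hu | apply level_mono, H].
Qed.

Lemma value_meet x y : finite_at x -> finite_at y -> finite_at (x ⊓ y) ->
  value (x ⊓ y) = Rmin (value x) (value y).
Proof.
  intros Hx Hy Hxy. apply Rle_antisym.
  - apply Rmin_glb; apply value_mono; auto using meet_le_l, meet_le_r.
  - apply value_ge; auto. intros m k Hq. eapply filter_mono; [| apply level_meet].
    apply filter_meet; apply level_of_lt_value; auto;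
      eapply Rlt_le_trans; eauto; [apply Rmin_l | apply Rmin_r].
Qed.

Lemma value_join x y : finite_at x -> finite_at y -> finite_at (x ⊔ y) ->
  decided_at x -> decided_at y -> value (x ⊔ y) = Rmax (value x) (value y).
Proof.
  intros Hx Hy Hxy Dx Dy. apply Rle_antisym.
  - apply value_le; auto. intros m k Hu.
    destruct (classic (U (level x m k))) as [H1 | H1];
      [apply (Rle_trans _ (value x)); [apply frac_le_value; auto | apply Rmax_l] |].
    destruct (classic (U (level y m k))) as [H2 | H2];
      [apply (Rle_trans _ (value y)); [apply frac_le_value; auto | apply Rmax_r] |].
    exfalso. apply (filter_not_disjoint _ _ (filter_meet _ _ (compl_of_not_level _ _ _ Dx H1)
                                              (compl_of_not_level _ _ _ Dy H2)) Hu).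
    apply level_join_upper.
  - apply Rmax_lub; apply value_mono; auto using join_ge_l, join_ge_r.
Qed.

Lemma value_add x y : finite_at x -> finite_at y -> finite_at (x ⊕ y) ->
  decided_at x -> decided_at y -> value (x ⊕ y) = value x + value y.
Proof.
  intros Hx Hy Hxy Dx Dy. apply Rle_antisym.
  - apply value_le; auto. intros m3 k3 Hu.
    destruct (Rle_lt_dec (frac m3 k3) (value x + value y)) as [| Hlt]; auto. exfalso.
    destruct (frac_dense (value x) (frac m3 k3 - value y)) as [m1 [k1 [H1 H1']]]; [lra |].
    destruct (frac_dense (value y) (frac m3 k3 - frac m1 k1)) as [m2 [k2 [H2 H2']]]; [lra |].
    assert (N1 : ~ U (level x m1 k1)) by (intro H; apply (frac_le_value x) in H; auto; lra).
    assert (N2 : ~ U (level y m2 k2)) by (intro H; apply (frac_le_value y) in H; auto; lra).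
    apply (filter_not_disjoint _ _ (filter_meet _ _ (compl_of_not_level _ _ _ Dx N1)
                                     (compl_of_not_level _ _ _ Dy N2)) Hu).
    apply level_add_upper. lra.
  - apply value_ge; auto. intros m3 k3 Hq.
    destruct (frac_dense (frac m3 k3 - value y) (value x)) as [m1 [k1 [H1 H1']]]; [lra |].
    destruct (frac_dense (frac m3 k3 - frac m1 k1) (value y)) as [m2 [k2 [H2 H2']]]; [lra |].
    eapply filter_mono;
      [apply (filter_meet _ _ (level_of_lt_value x m1 k1 Hx H1') (level_of_lt_value y m2 k2 Hy H2')) |].
    apply le_of_disjoint_compl; auto using level_ge0, level_le, le_meet, meet_le_trans_l.
    apply level_add_lower. lra.
Qed.

Lemma value_supm (ff : nat -> A) : (forall n, finite_at (ff n)) -> finite_at (supm A ff) ->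
  (forall m k, U (e ⊕ ⊖ level (supm A ff) m k) \/ exists n, U (level (ff (S n) ⊓ ff 0%nat) m k)) ->
  value (supm A ff) = Rsupm (fun n => value (ff n)).
Proof.
  intros Hf Hs Hreq.
  assert (Hle : forall n, ff (S n) ⊓ ff 0%nat ≤ supm A ff)
    by (intro n; rewrite supm_scons; apply (supm_ub (ff 0%nat) (fun n => ff (S n)) n)).
  destruct (proj2_sig (completeness _ (Rsupm_bound (fun n => value (ff n)))
                                     (Rsupm_nonempty (fun n => value (ff n))))) as [Hub Hleast].
  fold (Rsupm (fun n => value (ff n))) in Hub, Hleast.
  apply Rle_antisym.
  - apply value_le; auto. intros m k Hu. destruct (Hreq m k) as [Hc | [n Hn]].
    + exfalso. apply (filter_not_disjoint _ _ Hu Hc), level_compl_disjoint.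
    + apply (Rle_trans _ (Rmin (value (ff (S n))) (value (ff 0%nat))));
        [| apply Hub; exists n; reflexivity].
      apply Rmin_glb; apply frac_le_value; auto;
        (eapply filter_mono; [apply Hn | apply level_mono]); [apply meet_le_l | apply meet_le_r].
  - apply Hleast. intros r [n ->]. apply value_ge; auto. intros m k Hq.
    eapply filter_mono; [| apply level_mono, (Hle n)]. eapply filter_mono; [| apply level_meet].
    apply filter_meet; apply level_of_lt_value; auto;
      eapply Rlt_le_trans; eauto; [apply Rmin_l | apply Rmin_r].
Qed.

Hypothesis Ue : U e.

Lemma value_of_level_spec x c :
  (forall m k, level x m k = if (m <? c * Z.of_nat (S k))%Z then e else 𝟎) ->
  finite_at x /\ value x = IZR c.
Proof.
  intro Hx.
  assert (Hlev : forall m k, U (level x m k) <-> (m < c * Z.of_nat (S k))%Z).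
  { intros m k. rewrite Hx. destruct (Z.ltb_spec m (c * Z.of_nat (S k))); split; auto; try lia.
    intro Hu. exfalso. apply (proj2 (proj2 HU) _ Hu), le_refl. }
  assert (Hfin : finite_at x)
    by (split; [exists (c - 1)%Z, 0%nat | exists c, 0%nat]; rewrite Hlev; lia).
  replace (IZR c) with (frac c 0) by (unfold frac; simpl; field).
  split; [exact Hfin | apply Rle_antisym].
  - apply value_le; auto. intros m k Hu. apply Hlev in Hu. apply frac_le. lia.
  - apply value_ge; auto. intros m k Hq. apply Hlev. apply frac_lt in Hq. lia.
Qed.

Lemma value_zero : finite_at 𝟎 /\ value 𝟎 = 0.
Proof. apply value_of_level_spec. intros m k. rewrite level_zero. reflexivity. Qed.
Lemma value_e : finite_at e /\ value e = 1.
Proof. apply value_of_level_spec. intros m k. rewrite level_e, Z.mul_1_l. reflexivity. Qed.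

Lemma value_opp x : finite_at x -> finite_at (⊖ x) -> decided_at x -> decided_at (⊖ x) ->
  value (⊖ x) = - value x.
Proof.
  intros H1 H2 H3 H4. assert (H := value_add x (⊖ x) H1 H2).
  rewrite addrN, (proj2 value_zero) in H. specialize (H (proj1 value_zero) H3 H4). lra.
Qed.
End FilterValue.

Section RieszSpace.
Hypothesis HR : riesz_axioms A.
Local Notation sc := (scal A).

Lemma scalerDr a x y : sc a (x ⊕ y) = sc a x ⊕ sc a y. Proof. apply HR. Qed.
Lemma scalerDl a b x : sc (a + b) x = sc a x ⊕ sc b x. Proof. apply HR. Qed.
Lemma scalerA a b x : sc (a * b) x = sc a (sc b x). Proof. apply HR. Qed.
Lemma scale1r x : sc 1 x = x. Proof. apply HR. Qed.
Lemma scale_le a x y : 0 <= a -> x ≤ y -> sc a x ≤ sc a y. Proof. apply HR. Qed.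

Lemma scale0r x : sc 0 x = 𝟎.
Proof. apply idem_eq0. rewrite <- scalerDl, Rplus_0_r. reflexivity. Qed.
Lemma scaler0 a : sc a 𝟎 = 𝟎.
Proof. apply idem_eq0. rewrite <- scalerDr, addr0. reflexivity. Qed.
Lemma scaleNr a x : sc (- a) x = ⊖ sc a x.
Proof. apply opp_unique. rewrite <- scalerDl, Rplus_opp_r. apply scale0r. Qed.
Lemma scalerN a x : sc a (⊖ x) = ⊖ sc a x.
Proof. apply opp_unique. rewrite <- scalerDr, addrN. apply scaler0. Qed.
Lemma scale_nat n x : sc (INR n) x = nm n x.
Proof. induction n; [apply scale0r | rewrite S_INR, scalerDl, scale1r, IHn; reflexivity]. Qed.
Lemma scale_int j x : sc (IZR j) x = zmul j x.
Proof.
  replace (IZR j) with (INR (Z.to_nat j) + - INR (Z.to_nat (- j)))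
    by (rewrite !INR_IZR_INZ, <- opp_IZR, <- plus_IZR; f_equal; lia).
  rewrite scalerDl, scaleNr, !scale_nat. reflexivity.
Qed.
Lemma scale_ge0 a x : 0 <= a -> 𝟎 ≤ x -> 𝟎 ≤ sc a x.
Proof. intros. rewrite <- (scaler0 a). apply scale_le; auto. Qed.
Lemma scale_le_l a b x : a <= b -> 𝟎 ≤ x -> sc a x ≤ sc b x.
Proof.
  intros Hab Hx. replace b with (a + (b - a)) by ring. rewrite scalerDl.
  apply ler_addr, scale_ge0; auto; lra.
Qed.
Lemma scaleKr a x : a <> 0 -> sc (/ a) (sc a x) = x.
Proof. intro. rewrite <- scalerA, Rinv_l; auto. apply scale1r. Qed.
Lemma pos_scale a x : 0 < a -> pos_part (sc a x) = sc a (pos_part x).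
Proof.
  intro Ha. assert (Hi : 0 <= / a) by (left; apply Rinv_0_lt_compat, Ha).
  apply le_antisym.
  - apply join_le; [apply scale_le, le_pos | apply scale_ge0, pos_ge0]; lra.
  - rewrite <- (scaleKr (/ a) (pos_part (sc a x))), Rinv_inv by (apply Rinv_neq_0_compat; lra).
    apply scale_le; [lra |]. apply join_le.
    + rewrite <- (scaleKr a x) at 1 by lra. apply scale_le, le_pos; auto.
    + apply scale_ge0, pos_ge0; auto.
Qed.

Lemma excess_scale K x m : excess K x m = sc (INR K) x ⊕ ⊖ sc (IZR m) e.
Proof. unfold excess. rewrite scale_nat, scale_int. reflexivity. Qed.

Lemma level_scale x lam m k m' k' : 0 < lam -> frac m k <= lam * frac m' k' ->
  level x m' k' ≤ level (sc lam x) m k.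
Proof.
  intros Hl Hq. unfold level, frac in *.
  pose proof (INR_S_gt0 k) as HK. pose proof (INR_S_gt0 k') as HK'.
  set (mu := lam * INR (S k)).
  assert (Hmu : 0 < mu) by (apply Rmult_lt_0_compat; auto).
  assert (Hcmp : sc mu (excess (S k') x m') ≤ nm (S k') (excess (S k) (sc lam x) m)).
  { rewrite !excess_scale, <- scale_nat, !scalerDr, !scalerN, <- !scalerA.
    replace (INR (S k') * INR (S k) * lam) with (mu * INR (S k')) by (unfold mu; ring).
    apply lerD2l, lerN2, scale_le_l; auto.
    apply (Rmult_le_compat_r (INR (S k) * INR (S k'))) in Hq; [| nra].
    replace (IZR m / INR (S k) * (INR (S k) * INR (S k'))) with (INR (S k') * IZR m) in Hq
      by (field; lra).
    replace (lam * (IZR m' / INR (S k')) * (INR (S k) * INR (S k'))) with (mu * IZR m') in Hq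
      by (unfold mu; field; lra).
    exact Hq. }
  destruct (nat_above (/ mu * INR (S k'))) as [N HN].
  apply (band_comp_le_of_pos_le _ _ N).
  rewrite <- (scaleKr mu (pos_part (excess (S k') x m'))), <- pos_scale by lra.
  eapply le_trans; [apply scale_le; [left; apply Rinv_0_lt_compat, Hmu | apply pos_mono, Hcmp] |].
  rewrite pos_nmul, <- scale_nat, <- scalerA, <- scale_nat. apply scale_le_l; [| apply pos_ge0].
  exact HN.
Qed.

Lemma value_scale U x lam : is_filter U -> 0 < lam -> finite_at U x -> finite_at U (sc lam x) ->
  value U (sc lam x) = lam * value U x.
Proof.
  intros HU Hl Hx Hy. apply Rle_antisym.
  - apply value_le; auto. intros m k Hu.
    cut (frac m k / lam <= value U x).
    { intro H. apply (Rmult_le_compat_l lam) in H; [| lra].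
      replace (lam * (frac m k / lam)) with (frac m k) in H by (field; lra). exact H. }
    destruct (Rle_lt_dec (frac m k / lam) (value U x)) as [| Hlt]; auto.
    destruct (frac_dense _ _ Hlt) as [m' [k' [H1 H2]]]. exfalso.
    assert (Hin : U (level x m' k')).
    { apply (filter_mono U HU _ _ Hu). rewrite <- (scaleKr lam x) at 2 by lra.
      apply level_scale; [apply Rinv_0_lt_compat; auto | left; rewrite Rmult_comm; exact H2]. }
    apply (frac_le_value U HU x) in Hin; auto. lra.
  - apply value_ge; auto. intros m k Hq.
    destruct (frac_dense (frac m k / lam) (value U x)) as [m' [k' [H1 H2]]].
    { apply (Rmult_lt_reg_l lam); auto.
      replace (lam * (frac m k / lam)) with (frac m k) by (field; lra). exact Hq. }
    apply (filter_mono U HU _ _ (level_of_lt_value U HU x m' k' Hx H2)), level_scale; auto.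
    apply Rlt_le in H1. apply (Rmult_le_compat_l lam) in H1; [| lra].
    replace (lam * (frac m k / lam)) with (frac m k) in H1 by (field; lra). exact H1.
Qed.
End RieszSpace.

Section Counterexample.
Variable L : lang.
Variable prem : nat -> term * term.
Variables t1 t2 : term.
Variable v : nat -> A.
Hypothesis Hone : has_one L = true -> e = one A.
Hypothesis Hsc : has_scal L = true -> riesz_axioms A.

Definition diff_term := TJoin (TAdd t1 (TOpp t2)) (TOpp (TAdd t1 (TOpp t2))).
Definition gap := eval A v diff_term.

Definition root_term (i : nat) : term :=
  match i with
  | O => diff_term
  | S i' => let (n, w) := Cantor.of_nat i' in if Nat.eqb w 0 then fst (prem n) else snd (prem n)
  end.

Definition relevant u := exists i j, subterm (root_term i) j = u.

Lemma relevant_child u c : relevant u -> immediate_subterm c u -> relevant c.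
Proof.
  intros [i [j H]] Hc. rewrite <- H in Hc. destruct (subterm_closed _ _ _ Hc) as [n' H'].
  exists i, n'. exact H'.
Qed.
Lemma relevant_root i : relevant (root_term i).
Proof. exists i, 0%nat. apply subterm_0. Qed.
Lemma relevant_prem n : relevant (fst (prem n)) /\ relevant (snd (prem n)).
Proof.
  split; [exists (S (Cantor.to_nat (n, 0%nat))) | exists (S (Cantor.to_nat (n, 1%nat)))];
    exists 0%nat; rewrite subterm_0; unfold root_term; rewrite Cantor.cancel_of_to; reflexivity.
Qed.

(** An enumeration of the values of the relevant terms and, for each relevant
    [TScal r a], of [TScal (- r) a]: the value of [r • x] for [r < 0] is
    computed as the opposite of that of [(- r) • x]. *)
Definition negate_scalar (u : term) : term :=
  match u with TScal r a => TScal (- r) a | _ => u end.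
Definition rel_elem (idx : nat) : A :=
  let (b, r) := Cantor.of_nat idx in let (i, j) := Cantor.of_nat r in
  eval A v (if Nat.eqb b 0 then subterm (root_term i) j else negate_scalar (subterm (root_term i) j)).
Definition supm_args (idx : nat) : nat -> A :=
  let (i, j) := Cantor.of_nat idx in
  match subterm (root_term i) j with TSupm s => fun n => eval A v (s n) | _ => fun _ => 𝟎 end.

Lemma rel_elem_relevant u : relevant u ->
  (exists idx, rel_elem idx = eval A v u) /\ (exists idx, rel_elem idx = eval A v (negate_scalar u)).
Proof.
  intros [i [j H]]. split; [exists (Cantor.to_nat (0%nat, Cantor.to_nat (i, j)))
                          | exists (Cantor.to_nat (1%nat, Cantor.to_nat (i, j)))];
    unfold rel_elem; rewrite !Cantor.cancel_of_to; simpl; rewrite H; reflexivity.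
Qed.
Lemma supm_args_relevant s : relevant (TSupm s) -> exists idx, supm_args idx = fun n => eval A v (s n).
Proof.
  intros [i [j H]]. exists (Cantor.to_nat (i, j)).
  unfold supm_args. rewrite Cantor.cancel_of_to, H. reflexivity.
Qed.

Lemma gap_ge0 : 𝟎 ≤ gap.
Proof. apply absv_ge0. Qed.

(** Meeting family [0] decides the levels of an element, families [1] and [2]
    bound it from above and below, family [3] makes the value commute with
    [supm], and family [4] makes the value of [gap] positive. *)
Definition requirement_family (a idx : nat) (m : Z) (k : nat) : nat -> A :=
  match a with
  | O => scons (level (rel_elem idx) m k) (fun _ => e ⊕ ⊖ level (rel_elem idx) m k)
  | 1%nat => fun n => e ⊕ ⊖ level (rel_elem idx) (Z.of_nat n) 0
  | 2%nat => fun n => level (rel_elem idx) (- Z.of_nat n) 0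
  | 3%nat => scons (e ⊕ ⊖ level (sm (scons (supm_args idx 0%nat) (fun n => supm_args idx (S n)))) m k)
                   (fun n => level (supm_args idx (S n) ⊓ supm_args idx 0%nat) m k)
  | _ => scons (e ⊕ ⊖ band_comp gap) (fun n => level gap 1 n)
  end.

Definition requirement (r : nat) : nat -> A :=
  let (a, r1) := Cantor.of_nat r in
  let (idx, r2) := Cantor.of_nat r1 in
  let (p, r3) := Cantor.of_nat r2 in
  let (q, k) := Cantor.of_nat r3 in
  requirement_family a idx (Z.of_nat p - Z.of_nat q) k.

Lemma requirement_code a idx m k :
  exists r, requirement r = requirement_family a idx m k.
Proof.
  exists (Cantor.to_nat (a, Cantor.to_nat (idx, Cantor.to_nat (Z.to_nat m,
            Cantor.to_nat (Z.to_nat (- m), k))))).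
  unfold requirement. rewrite !Cantor.cancel_of_to. f_equal. lia.
Qed.

Lemma requirement_ge0 r n : 𝟎 ≤ requirement r n.
Proof.
  unfold requirement. destruct (Cantor.of_nat r) as [a r1], (Cantor.of_nat r1) as [idx r2],
    (Cantor.of_nat r2) as [p r3], (Cantor.of_nat r3) as [q k].
  destruct a as [|[|[|[|a]]]], n; simpl;
    auto using level_ge0, compl_level_ge0, compl_ge0, band_comp_le.
Qed.

Lemma requirement_covering r : covering (requirement r).
Proof.
  unfold requirement. destruct (Cantor.of_nat r) as [a r1], (Cantor.of_nat r1) as [idx r2],
    (Cantor.of_nat r2) as [p r3], (Cantor.of_nat r3) as [q k].
  destruct a as [|[|[|[|a]]]]; cbn [requirement_family];
    auto using covering_level_dichotomy, covering_level_upper, covering_level_lower,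
      covering_supm, covering_pos, gap_ge0.
Qed.

Hypothesis Hprem : forall n, in_lang L (fst (prem n)) /\ in_lang L (snd (prem n)).
Hypothesis Ht1 : in_lang L t1.
Hypothesis Ht2 : in_lang L t2.
Hypothesis HRq : qe_holds Rstruct prem t1 t2.
Hypothesis Hpv : forall n, eval A v (fst (prem n)) = eval A v (snd (prem n)).

Section GenericFilter.
Variable U : A -> Prop.
Hypothesis HU : is_filter U.
Hypothesis Hmeets : forall r, exists n, U (requirement r n).
Hypothesis Ugap : U (band_comp gap).

Lemma meets_family a idx m k : exists n, U (requirement_family a idx m k n).
Proof. destruct (requirement_code a idx m k) as [r Hr]. rewrite <- Hr. apply Hmeets. Qed.

Lemma filter_e : U e.
Proof. apply (filter_mono U HU _ _ Ugap), band_comp_le. Qed.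

Lemma rel_elem_finite idx : finite_at U (rel_elem idx) /\ decided_at U (rel_elem idx).
Proof.
  split; [split |].
  - destruct (meets_family 2 idx 0 0) as [n Hn]. exists (- Z.of_nat n)%Z, 0%nat. exact Hn.
  - destruct (meets_family 1 idx 0 0) as [n Hn]. exists (Z.of_nat n), 0%nat.
    intro H. apply (filter_not_disjoint U HU _ _ H Hn), level_compl_disjoint.
  - intros m k. destruct (meets_family 0 idx m k) as [[|n] Hn]; auto.
Qed.

Lemma relevant_finite u : relevant u -> finite_at U (eval A v u) /\ decided_at U (eval A v u).
Proof. intro H. destruct (proj1 (rel_elem_relevant u H)) as [idx <-]. apply rel_elem_finite. Qed.
Lemma relevant_negate_finite u : relevant u ->
  finite_at U (eval A v (negate_scalar u)) /\ decided_at U (eval A v (negate_scalar u)).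
Proof. intro H. destruct (proj2 (rel_elem_relevant u H)) as [idx <-]. apply rel_elem_finite. Qed.

Local Notation w := (fun i => value U (v i)).

Lemma value_scal_term r a : relevant (TScal r a) -> has_scal L = true ->
  value U (scal A r (eval A v a)) = r * value U (eval A v a).
Proof.
  intros Hr Hs. pose proof (Hsc Hs) as HR.
  assert (Ha : relevant a) by (apply (relevant_child _ _ Hr); reflexivity).
  destruct (relevant_finite _ Ha) as [Fx Dx], (relevant_finite _ Hr) as [Fy Dy].
  simpl in Fy, Dy. set (x := eval A v a) in *.
  destruct (Rtotal_order r 0) as [Hn | [-> | Hp]].
  - destruct (relevant_negate_finite _ Hr) as [Fn Dn]. simpl in Fn, Dn. fold x in Fn, Dn.
    replace (scal A r x) with (⊖ scal A (- r) x) in * by (rewrite <- scaleNr, Ropp_involutive; auto).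
    rewrite value_opp, value_scale; auto using filter_e; [ring | lra].
  - rewrite (scale0r HR), (proj2 (value_zero U HU filter_e)). ring.
  - apply value_scale; auto.
Qed.

Lemma value_supm_term s : relevant (TSupm s) ->
  (forall n, eval Rstruct w (s n) = value U (eval A v (s n))) ->
  Rsupm (fun n => eval Rstruct w (s n)) = value U (supm A (fun n => eval A v (s n))).
Proof.
  intros Hr IH.
  replace (fun n => eval Rstruct w (s n)) with (fun n => value U (eval A v (s n)))
    by (apply functional_extensionality; intro n; symmetry; apply IH).
  destruct (supm_args_relevant _ Hr) as [idx Hidx].
  symmetry. apply value_supm; auto.
  - intro n. apply relevant_finite, (relevant_child _ _ Hr). exists n; reflexivity.
  - apply (relevant_finite _ Hr).
  - intros m k. destruct (meets_family 3 idx m k) as [[|n] Hn]; simpl in Hn; rewrite Hidx in Hn.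
    + left. rewrite supm_scons. exact Hn.
    + right. exists n. exact Hn.
Qed.

Lemma value_eval u : relevant u -> in_lang L u -> eval Rstruct w u = value U (eval A v u).
Proof.
  induction u as [i | | | a IHa b IHb | a IHa | a IHa b IHb | a IHa b IHb | r a IHa | s IHs];
    intros Hr Hl; simpl in Hl |- *;
    try (assert (Ha : relevant a); [apply (relevant_child _ _ Hr); simpl; auto |];
         rewrite IHa by tauto; destruct (relevant_finite _ Ha) as [Fa Da]);
    try (assert (Hb : relevant b); [apply (relevant_child _ _ Hr); simpl; auto |];
         rewrite IHb by tauto; destruct (relevant_finite _ Hb) as [Fb Db]);
    symmetry; destruct (relevant_finite _ Hr) as [Fr Dr]; simpl in Fr, Dr.
  - reflexivity.
  - apply (value_zero U HU filter_e).
  - rewrite <- (Hone Hl). apply (value_e U HU filter_e).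
  - apply value_add; auto.
  - apply value_opp; auto using filter_e.
  - apply value_join; auto.
  - apply value_meet; auto.
  - apply value_scal_term; tauto.
  - symmetry. apply value_supm_term; auto. intro n.
    apply IHs; [apply (relevant_child _ _ Hr); exists n; reflexivity | apply Hl].
Qed.

Lemma value_gap_eq0 : value U gap = 0.
Proof.
  assert (Hconc : eval Rstruct w t1 = eval Rstruct w t2).
  { apply HRq. intro n. destruct (relevant_prem n) as [H1 H2].
    rewrite (value_eval _ H1 (proj1 (Hprem n))), (value_eval _ H2 (proj2 (Hprem n))), Hpv.
    reflexivity. }
  unfold gap. rewrite <- value_eval; [| apply (relevant_root 0) | simpl; tauto].
  simpl. rewrite Hconc, Rplus_opp_r, Ropp_0, Rmax_left; lra.
Qed.

Lemma value_gap_pos : 0 < value U gap.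
Proof.
  destruct (meets_family 4 0 0 0) as [[|n] Hn]; simpl in Hn.
  - exfalso. apply (filter_not_disjoint U HU _ _ Ugap Hn), band_comp_compl_disjoint.
  - destruct (relevant_finite _ (relevant_root 0)) as [Hf _].
    apply (frac_le_value U HU gap 1 n Hf) in Hn.
    assert (0 < frac 1 n) by (apply Rdiv_lt_0_compat; [lra | apply INR_S_gt0]). lra.
Qed.
End GenericFilter.

Lemma band_comp_gap_eq0 : band_comp gap = 𝟎.
Proof.
  apply NNPP. intro Hnz.
  destruct (rasiowa_sikorski requirement requirement_ge0 requirement_covering (band_comp gap))
    as [U [HU [Ugap Hmeets]]]; [repeat split; auto using band_comp_ge0, band_comp_le |].
  pose proof (value_gap_pos U HU Hmeets Ugap) as Hpos.
  rewrite (value_gap_eq0 U HU Hmeets Ugap) in Hpos. lra.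
Qed.
End Counterexample.
End Band.

Lemma one_ge0 : unit_axiom A -> 𝟎 ≤ one A.
Proof.
  intro Hun. specialize (Hun 𝟎). rewrite absv_id in Hun by apply le_refl.
  assert (Hm : forall x, 𝟎 ⊓ x = ⊖ neg_part x)
    by (intro x; unfold neg_part; rewrite oppJ, oppK, opp0, meetC; reflexivity).
  apply (le_trans _ (𝟎 ⊓ one A)); [| apply meet_le_r].
  rewrite <- Hun at 1. apply supm_least. intro n. apply meet_le_trans_l.
  rewrite !Hm. apply lerN2. rewrite neg_nmul. apply le_nmul; [apply neg_ge0 | lia].
Qed.

(* The unit axiom says that [one A] is a weak order unit. *)
Lemma band_comp_one_neq0 c : unit_axiom A -> 𝟎 ≤ c -> c <> 𝟎 -> band_comp (one A) c <> 𝟎.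
Proof.
  intros Hun Hc Hne HB. apply Hne.
  assert (Ho := one_ge0 Hun).
  assert (Hd : disjoint c (one A)).
  { apply disjointP; auto. rewrite <- HB.
    eapply le_trans; [| apply (band_comp_ub (one A) c 1)].
    rewrite nmul1, pos_id; auto using le_refl. }
  specialize (Hun c). rewrite absv_id in Hun by exact Hc.
  apply le_antisym; [| exact Hc]. rewrite <- Hun. apply supm_least. intro n.
  apply meet_le_trans_l. rewrite (disjoint_nmul_r (S n) c (one A)); auto using le_refl.
Qed.
End SigmaComplete.
End LatticeGroup.

Theorem mainTheorem18 :
  forall (L : lang) (prem : nat -> term * term) (t1 t2 : term),
    (forall n, in_lang L (fst (prem n)) /\ in_lang L (snd (prem n))) ->
    in_lang L t1 -> in_lang L t2 ->
    qe_holds Rstruct prem t1 t2 ->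
    forall A : structure, in_variety L A -> qe_holds A prem t1 t2.
Proof.
  intros L prem t1 t2 Hprem Ht1 Ht2 HRq A [HA [HS [Hsc Hun]]] v Hpv.
  set (c := gap A t1 t2 v).
  assert (Hc : le A (zero A) c) by apply (absv_ge0 A HA).
  apply NNPP. intro Hne.
  assert (Hcne : c <> zero A).
  { intro H. apply Hne, (addIr A HA (opp A (eval A v t2))). rewrite (addrN A HA).
    apply (absv_eq0 A HA), H. }
  destruct (has_one L) eqn:Ho.
  - apply (band_comp_one_neq0 A HA HS c (Hun eq_refl) Hc Hcne).
    apply (band_comp_gap_eq0 A HA HS _ (one_ge0 A HA HS (Hun eq_refl)) L prem t1 t2 v); auto.
  - apply Hcne. rewrite <- (band_comp_e A HA HS c Hc).
    apply (band_comp_gap_eq0 A HA HS _ Hc L prem t1 t2 v); auto; congruence.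
Qed.
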